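(* Let $m\ge4$ and let $g(x_1,x_2,x_3)=a_1(cx_1+\alpha_1)^2+a_2(cx_2+\alpha_2)^2+a_3(cx_3+\alpha_3)^2$ be a tight regular complete quadratic polynomial where $a_1,a_2,a_3$ are positive integers with $\gcd(a_1,a_2,a_3)=1$ and $a_1\le a_2\le a_3$, the lattice $J=\langle a_1,a_2,a_3\rangle$ is $p$-stable for every prime $p\nmid c$, $\alpha_i\in\mathbb{Z}$ with $0<\alpha_i<c/2$, and $\gcd(c,\alpha_1\alpha_2\alpha_3)=1$. Let $T$ be the set of primes $p\ge5$ such that $J\otimes\mathbb{Z}_p$ is anisotropic, and $t=|T|$. Let $\kappa$ be a positive integer coprime to every prime in $T$, and let $\nu$ be a nonnegative integer such that $\delta c(\kappa n+\nu)+a_1\alpha_1^2+a_2\alpha_2^2+a_3\alpha_3^2$ is represented by $g$ over $\mathbb{Z}_2$ and over $\mathbb{Z}_3$ for every integer $n\ge0$. For $u\in\mathbb{Z}_{\ge0}$ let $\beta(u)=\delta c(\kappa u+\nu)+a_1\alpha_1^2+a_2\alpha_2^2+a_3\alpha_3^2$. Then for every positive integer $s\ge t$ and every positive integer $n$, $$\bigl|\{0\le u\le n-1:\ \beta(u)\text{ is represented by }g\text{ over }\mathbb{Z}\}\bigr|\ge\eta(n,s).$$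
   Context: Define $\delta=4$ if $m$ is odd, $\delta=2$ if $m\equiv2\pmod4$, $\delta=1$ if $m\equiv0\pmod4$, and $c=\delta\frac{m-2}{2}$. Representation by $g$ over $R\in\{\mathbb{Z},\mathbb{Z}_p,\mathbb{R}\}$ means solvability of $g(\mathbf{x})=n$ with $\mathbf{x}\in R^3$; $g$ is tight regular if it represents over $\mathbb{Z}$ every integer $\ge\min\{g(\mathbf{x}):\mathbf{x}\in\mathbb{Z}^3\}$ that is represented over every $\mathbb{Z}_p$ and over $\mathbb{R}$. For an odd prime $p$ with nonsquare unit $\Delta_p$, a diagonal ternary lattice $K$ is $p$-stable if $\langle1,-1\rangle$ is represented by $K\otimes\mathbb{Z}_p$ or $K\otimes\mathbb{Z}_p\cong\langle1,-\Delta_p\rangle\perp\langle p\epsilon\rangle$ with $\epsilon\in\mathbb{Z}_p^\times$; $K$ is $2$-stable if $K\otimes\mathbb{Z}_2$ is unimodular or $\langle1,3\rangle$ or $\langle1,7\rangle$ is represented by $K\otimes\mathbb{Z}_2$. The function $\eta$: let $P$ be the set of primes $\ge5$. For an odd prime $p$ and $s\ge1$ let $\psi_p(p^s)=\frac{p^s+p+2}{2p+2}$ if $s$ is odd and $\frac{p^s+2p+1}{2p+2}$ if $s$ is even. For $n\in\mathbb{N}$ with base-$p$ expansion $n=\sum_{i=0}^e b_ip^i$ ($0\le b_i\le p-1$), let $\psi_p(n)=\sum_{1\le i\le e}b_i\psi_p(p^i)$ if $b_0=0$ and $\psi_p(n)=1+\sum_{1\le i\le e}b_i\psi_p(p^i)$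 otherwise. Then $\eta(n,s)=\min\{n-\sum_{p\in P'}\psi_p(n):\ P'\subset P,\ |P'|=s\}$. *)

From Stdlib Require Import ZArith Znumtheory Reals List.
Import ListNotations.
Open Scope Z_scope.

Definition delta_m (m : Z) : Z :=
  if Z.odd m then 4 else if Z.eqb (m mod 4) 2 then 2 else 1.
(* c = delta * (m-2)/2 ; the product is always even, so the division is exact *)
Definition c_m (m : Z) : Z := delta_m m * (m - 2) / 2.

Record cqp := CQP { qc : Z; qa1 : Z; qa2 : Z; qa3 : Z; qal1 : Z; qal2 : Z; qal3 : Z }.

Definition gZ (g : cqp) (x1 x2 x3 : Z) : Z :=
  qa1 g * (qc g * x1 + qal1 g) ^ 2 + qa2 g * (qc g * x2 + qal2 g) ^ 2
  + qa3 g * (qc g * x3 + qal3 g) ^ 2.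

Definition gR (g : cqp) (x1 x2 x3 : R) : R :=
  (IZR (qa1 g) * (IZR (qc g) * x1 + IZR (qal1 g)) ^ 2
  + IZR (qa2 g) * (IZR (qc g) * x2 + IZR (qal2 g)) ^ 2
  + IZR (qa3 g) * (IZR (qc g) * x3 + IZR (qal3 g)) ^ 2)%R.

(** * p-adic integers, modelled as the inverse limit Z_p = lim Z/p^k Z :
    a p-adic integer is a sequence x with x (k) read modulo p^k and
    x (k+1) = x (k) (mod p^k).  An identity between integer polynomial
    expressions holds in Z_p iff it holds modulo p^k at every level k. *)
Definition ppow (p : Z) (k : nat) : Z := p ^ Z.of_nat k.

Definition padic (p : Z) (x : nat -> Z) : Prop :=
  forall k : nat, (ppow p k | x (S k) - x k).

Definition padic_unit (p : Z) (x : nat -> Z) : Prop := ~ (p | x 1%nat).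

Definition padic_nonzero (p : Z) (x : nat -> Z) : Prop :=
  exists k : nat, ~ (ppow p k | x k).

Definition rep_Z (g : cqp) (N : Z) : Prop :=
  exists x1 x2 x3 : Z, gZ g x1 x2 x3 = N.

Definition rep_Zp (g : cqp) (p : Z) (N : Z) : Prop :=
  exists x1 x2 x3 : nat -> Z, padic p x1 /\ padic p x2 /\ padic p x3 /\
    forall k : nat, (ppow p k | gZ g (x1 k) (x2 k) (x3 k) - N).

Definition rep_R (g : cqp) (N : Z) : Prop :=
  exists x1 x2 x3 : R, gR g x1 x2 x3 = IZR N.

Definition tight_regular (g : cqp) : Prop :=
  exists gmin : Z,
    (exists x1 x2 x3, gZ g x1 x2 x3 = gmin) /\
    (forall x1 x2 x3, gmin <= gZ g x1 x2 x3) /\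
    (forall N : Z, gmin <= N ->
       (forall p, prime p -> rep_Zp g p N) -> rep_R g N -> rep_Z g N).

Definition QJ (a1 a2 a3 x1 x2 x3 : Z) : Z := a1 * x1 ^ 2 + a2 * x2 ^ 2 + a3 * x3 ^ 2.
Definition BJ (a1 a2 a3 x1 x2 x3 y1 y2 y3 : Z) : Z :=
  a1 * x1 * y1 + a2 * x2 * y2 + a3 * x3 * y3.
Definition det3 (x1 x2 x3 y1 y2 y3 z1 z2 z3 : Z) : Z :=
  x1 * (y2 * z3 - y3 * z2) - x2 * (y1 * z3 - y3 * z1) + x3 * (y1 * z2 - y2 * z1).

(* the binary lattice <d1,d2> is represented by J (x) Z_p :
   there are v, w in Z_p^3 with Q(v) = d1, Q(w) = d2, B(v,w) = 0 *)
Definition represents_binary (p a1 a2 a3 d1 d2 : Z) : Prop :=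
  exists v1 v2 v3 w1 w2 w3 : nat -> Z,
    padic p v1 /\ padic p v2 /\ padic p v3 /\
    padic p w1 /\ padic p w2 /\ padic p w3 /\
    forall k : nat,
      (ppow p k | QJ a1 a2 a3 (v1 k) (v2 k) (v3 k) - d1) /\
      (ppow p k | QJ a1 a2 a3 (w1 k) (w2 k) (w3 k) - d2) /\
      (ppow p k | BJ a1 a2 a3 (v1 k) (v2 k) (v3 k) (w1 k) (w2 k) (w3 k)).

(* J (x) Z_p is isometric to <1,-Delta> _|_ <p eps> with eps a unit:
   there is a Z_p-basis e1,e2,e3 of Z_p^3 (determinant a unit) which is
   orthogonal with Q(e1) = 1, Q(e2) = -Delta, Q(e3) = p eps. *)
Definition isometric_1_mDelta_peps (p a1 a2 a3 Delta : Z) : Prop :=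
  exists e11 e12 e13 e21 e22 e23 e31 e32 e33 eps : nat -> Z,
    padic p e11 /\ padic p e12 /\ padic p e13 /\
    padic p e21 /\ padic p e22 /\ padic p e23 /\
    padic p e31 /\ padic p e32 /\ padic p e33 /\
    padic p eps /\ padic_unit p eps /\
    ~ (p | det3 (e11 1%nat) (e12 1%nat) (e13 1%nat) (e21 1%nat) (e22 1%nat)
               (e23 1%nat) (e31 1%nat) (e32 1%nat) (e33 1%nat)) /\
    forall k : nat,
      (ppow p k | QJ a1 a2 a3 (e11 k) (e12 k) (e13 k) - 1) /\
      (ppow p k | QJ a1 a2 a3 (e21 k) (e22 k) (e23 k) + Delta) /\
      (ppow p k | QJ a1 a2 a3 (e31 k) (e32 k) (e33 k) - p * eps k) /\
      (ppow p k | BJ a1 a2 a3 (e11 k) (e12 k) (e13 k) (e21 k) (e22 k) (e23 k)) /\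
      (ppow p k | BJ a1 a2 a3 (e11 k) (e12 k) (e13 k) (e31 k) (e32 k) (e33 k)) /\
      (ppow p k | BJ a1 a2 a3 (e21 k) (e22 k) (e23 k) (e31 k) (e32 k) (e33 k)).

(* Delta is a nonsquare unit of Z_p (p odd): an integer which is a
   quadratic nonresidue mod p.  The isometry class of <1,-Delta> does not
   depend on the choice of Delta. *)
Definition nonsquare_unit (p Delta : Z) : Prop :=
  ~ (p | Delta) /\ forall y : Z, ~ (p | y ^ 2 - Delta).

Definition stable_odd (p a1 a2 a3 : Z) : Prop :=
  represents_binary p a1 a2 a3 1 (-1) \/
  exists Delta, nonsquare_unit p Delta /\ isometric_1_mDelta_peps p a1 a2 a3 Delta.

(* J (x) Z_2 unimodular: its Gram determinant a1 a2 a3 is a unit of Z_2 *)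
Definition stable_2 (a1 a2 a3 : Z) : Prop :=
  ~ (2 | a1 * a2 * a3) \/
  represents_binary 2 a1 a2 a3 1 3 \/ represents_binary 2 a1 a2 a3 1 7.

Definition pstable (p a1 a2 a3 : Z) : Prop :=
  if Z.eqb p 2 then stable_2 a1 a2 a3 else stable_odd p a1 a2 a3.

Definition anisotropic (p a1 a2 a3 : Z) : Prop :=
  ~ exists x1 x2 x3 : nat -> Z,
      padic p x1 /\ padic p x2 /\ padic p x3 /\
      (padic_nonzero p x1 \/ padic_nonzero p x2 \/ padic_nonzero p x3) /\
      forall k : nat, (ppow p k | QJ a1 a2 a3 (x1 k) (x2 k) (x3 k)).

Open Scope R_scope.

Definition psi_pow (p : Z) (i : nat) : R :=
  if Nat.odd i
  then (IZR p ^ i + IZR p + 2) / (2 * IZR p + 2)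
  else (IZR p ^ i + 2 * IZR p + 1) / (2 * IZR p + 2).

Definition digit (p n : Z) (i : nat) : Z := ((n / p ^ Z.of_nat i) mod p)%Z.

(* psi_p(n) = [b_0 <> 0] + sum_{1 <= i <= e} b_i psi_p(p^i).
   The sum is taken over 1 <= i <= n, which is >= e (digits beyond e vanish). *)
Definition psi (p n : Z) : R :=
  (if Z.eqb (digit p n 0) 0 then 0 else 1)
  + fold_right Rplus 0
      (map (fun i => IZR (digit p n i) * psi_pow p i) (seq 1 (Z.to_nat n))).

Definition admissible (s : nat) (P' : list Z) : Prop :=
  NoDup P' /\ length P' = s /\ forall p, In p P' -> prime p /\ (5 <= p)%Z.

Definition eta_value (n : Z) (P' : list Z) : R :=
  IZR n - fold_right Rplus 0 (map (fun p => psi p n) P').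

Definition is_eta (n : Z) (s : nat) (e : R) : Prop :=
  (exists P', admissible s P' /\ eta_value n P' = e) /\
  (forall P', admissible s P' -> e <= eta_value n P').

Close Scope R_scope.

From Stdlib Require Import ZArith Znumtheory Zpow_facts Reals List Lia Lra
  Classical ClassicalEpsilon.
Import ListNotations.
Open Scope Z_scope.

(* Fix u and N = beta(u), and look at each prime p.  If p | c, a coordinate with
   unit coefficient a_i solves g = N over Z_p by Hensel's lemma, since
   N = sum a_i al_i^2 + c D.  If p does not divide c, p-stability leaves two cases:
   J represents <1,-1>, and then it represents every p-adic integer; or
   J ~ <1,-Delta> _|_ <p eps>, and then J is anisotropic, so p is in T, and N is
   represented unless N = p^r M with r odd and M not congruent to eps z^2 mod p.
   In p consecutive terms of a progression with difference prime to p, exactly one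
   term is divisible by p and at most (p - 1) / 2 of the others avoid the class
   eps z^2; following the powers of p along the base-p digits of n bounds the
   number of such exceptional u < n by psi_p(n).  Removing them for every p in T
   leaves at least n - sum_{p in T} psi_p(n) >= eta(n, s) values of u at which
   beta(u) is represented everywhere locally (at 2 and 3 by hypothesis), hence
   by g over Z because g is tight regular. *)

(** * p-adic sequences *)

Section Padic.
Variable p : Z.

Lemma ppow_0 : ppow p 0 = 1.
Proof. reflexivity. Qed.

Lemma ppow_1 : ppow p 1 = p.
Proof. apply Z.pow_1_r. Qed.

Lemma ppow_S k : ppow p (S k) = p * ppow p k.
Proof. unfold ppow. rewrite Nat2Z.inj_succ, Z.pow_succ_r by lia. ring. Qed.

Lemma ppow_add k l : ppow p (k + l) = ppow p k * ppow p l.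
Proof. unfold ppow. rewrite Nat2Z.inj_add, Z.pow_add_r by lia. reflexivity. Qed.

Lemma ppow_divide k l : (k <= l)%nat -> (ppow p k | ppow p l).
Proof.
  intros Hkl. replace l with (k + (l - k))%nat by lia. rewrite ppow_add.
  apply Z.divide_factor_l.
Qed.

Lemma divide_ppow k : (1 <= k)%nat -> (p | ppow p k).
Proof. intros Hk. rewrite <- ppow_1 at 1. apply ppow_divide, Hk. Qed.

Lemma padic_cong x k l : padic p x -> (k <= l)%nat -> (ppow p k | x l - x k).
Proof.
  intros Hx Hkl. induction Hkl as [|l Hkl IH].
  - rewrite Z.sub_diag. apply Z.divide_0_r.
  - replace (x (S l) - x k) with ((x (S l) - x l) + (x l - x k)) by ring.
    apply Z.divide_add_r; [|exact IH].
    apply Z.divide_trans with (ppow p l); [apply ppow_divide, Hkl | apply Hx].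
Qed.

Lemma padic_cong1 x k : padic p x -> (1 <= k)%nat -> (p | x k - x 1%nat).
Proof. intros Hx Hk. rewrite <- ppow_1. apply padic_cong; assumption. Qed.

Lemma padic_const c : padic p (fun _ => c).
Proof. intro k. rewrite Z.sub_diag. apply Z.divide_0_r. Qed.

Lemma padic_add x y : padic p x -> padic p y -> padic p (fun k => x k + y k).
Proof.
  intros Hx Hy k. replace (x (S k) + y (S k) - (x k + y k))
    with ((x (S k) - x k) + (y (S k) - y k)) by ring.
  apply Z.divide_add_r; auto.
Qed.

Lemma padic_sub x y : padic p x -> padic p y -> padic p (fun k => x k - y k).
Proof.
  intros Hx Hy k. replace (x (S k) - y (S k) - (x k - y k))
    with ((x (S k) - x k) - (y (S k) - y k)) by ring.
  apply Z.divide_sub_r; auto.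
Qed.

Lemma padic_mul x y : padic p x -> padic p y -> padic p (fun k => x k * y k).
Proof.
  intros Hx Hy k. replace (x (S k) * y (S k) - x k * y k)
    with (x (S k) * (y (S k) - y k) + y k * (x (S k) - x k)) by ring.
  apply Z.divide_add_r; apply Z.divide_mul_r; auto.
Qed.

Lemma padic_of_lifts (P : nat -> Z -> Prop) y0 :
  P 0%nat y0 ->
  (forall k y, P k y -> exists y', P (S k) y' /\ (ppow p k | y' - y)) ->
  exists x, padic p x /\ forall k, P k (x k).
Proof.
  intros H0 Hlift.
  assert (lift : forall k (y : {y | P k y}),
            {y' | P (S k) y' /\ (ppow p k | y' - proj1_sig y)}).
  { intros k [y Hy]. apply constructive_indefinite_description, Hlift, Hy. }
  pose (x := fix x (k : nat) : {y | P k y} :=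
    match k with
    | O => exist _ y0 H0
    | S k' => let (y', Hy') := lift k' (x k') in exist _ y' (proj1 Hy')
    end).
  exists (fun k => proj1_sig (x k)). split.
  - intro k. simpl. destruct (lift k (x k)) as [y' [? Hy']]. exact Hy'.
  - intro k. exact (proj2_sig (x k)).
Qed.

End Padic.

(** * Arithmetic modulo a prime *)

Lemma linear_congruence_solvable p D r :
  prime p -> ~ (p | D) -> exists t, (p | r + t * D).
Proof.
  intros Hp HD.
  destruct (rel_prime_bezout p D (prime_rel_prime p Hp D HD)) as [u v Huv].
  exists (- r * v), (r * u).
  replace (r + - r * v * D) with (r * (1 - v * D)) by ring. rewrite <- Huv. ring.
Qed.

Lemma divide_small_eq0 p a : (p | a) -> - p < a < p -> a = 0.
Proof.
  intros [k ->] H. destruct (Z.lt_trichotomy k 0) as [Hk|[->|Hk]]; [nia|ring|nia].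
Qed.

Lemma prime_not_divide_2 p : prime p -> p <> 2 -> ~ (p | 2).
Proof.
  intros Hp H2 Hd. assert (p2 := prime_ge_2 p Hp).
  apply Z.divide_pos_le in Hd; lia.
Qed.

Lemma prime_not_divide_mul p a b :
  prime p -> ~ (p | a) -> ~ (p | b) -> ~ (p | a * b).
Proof. intros Hp Ha Hb H. destruct (prime_mult p Hp a b H); auto. Qed.

Lemma prime_not_divide_sq p a : prime p -> ~ (p | a) -> ~ (p | a ^ 2).
Proof. intros Hp Ha. rewrite Z.pow_2_r. apply prime_not_divide_mul; auto. Qed.

Lemma not_divide_cong p a b : (p | a - b) -> ~ (p | b) -> ~ (p | a).
Proof.
  intros H Hb Ha. apply Hb. replace b with (a - (a - b)) by ring.
  apply Z.divide_sub_r; auto.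
Qed.

Lemma prime_not_divide_coprime p a b :
  prime p -> Z.gcd a b = 1 -> (p | a) -> ~ (p | b).
Proof.
  intros Hp G Ha Hb. assert (D := Z.gcd_greatest a b p Ha Hb). rewrite G in D.
  assert (p2 := prime_ge_2 p Hp). apply Z.divide_pos_le in D; lia.
Qed.

Lemma odd_prime_half p : prime p -> p <> 2 -> p = 2 * ((p - 1) / 2) + 1.
Proof.
  intros Hp H2. assert (p2 := prime_ge_2 p Hp).
  assert (Hodd : p mod 2 = 1).
  { assert (H := Z.mod_pos_bound p 2). destruct (Z.eq_dec (p mod 2) 0) as [E|E]; [|lia].
    assert (D : (2 | p)) by (apply Z.mod_divide; lia).
    destruct (prime_divisors p Hp 2 D) as [?|[?|[?|?]]]; lia. }
  assert (E := Z.div_mod p 2 ltac:(lia)). rewrite Hodd in E.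
  replace (p - 1) with ((p / 2) * 2) by lia. rewrite Z.div_mul; lia.
Qed.

Lemma divide_of_eq_mod p a b : 0 < p -> a mod p = b mod p -> (p | a - b).
Proof.
  intros Hp E. exists (a / p - b / p).
  rewrite (Z.div_mod a p), (Z.div_mod b p) at 1 by lia. rewrite E. ring.
Qed.

Lemma eqm_of_divide m a b : m <> 0 -> (m | a - b) -> eqm m a b.
Proof.
  intros Hm [k Hk]. unfold eqm. replace a with (b + k * m) by lia.
  apply Z_mod_plus_full.
Qed.

Lemma sq_mod_prime_inj p w x y :
  prime p -> ~ (p | w) -> 0 <= x <= (p - 1) / 2 -> 0 <= y <= (p - 1) / 2 ->
  (p | w * x ^ 2 - w * y ^ 2) -> x = y.
Proof.
  intros Hp Hw Hx Hy H. assert (p2 := prime_ge_2 p Hp).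
  assert (h2 : 2 * ((p - 1) / 2) <= p - 1) by (apply Z.mul_div_le; lia).
  replace (w * x ^ 2 - w * y ^ 2) with (w * ((x - y) * (x + y))) in H by ring.
  destruct (prime_mult p Hp _ _ H) as [H1|H1]; [contradiction|].
  destruct (prime_mult p Hp _ _ H1) as [H2|H2]; apply divide_small_eq0 in H2; lia.
Qed.

Definition zrange (n : Z) : list Z := map Z.of_nat (seq 0 (Z.to_nat n)).

Lemma in_zrange z n : In z (zrange n) <-> 0 <= z < n.
Proof.
  unfold zrange. rewrite in_map_iff. split.
  - intros [i [<- Hi]]. apply in_seq in Hi. lia.
  - intros H. exists (Z.to_nat z). split; [lia | apply in_seq; lia].
Qed.

Lemma length_zrange n : length (zrange n) = Z.to_nat n.
Proof. unfold zrange. rewrite length_map, length_seq. reflexivity. Qed.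

Lemma NoDup_zrange n : NoDup (zrange n).
Proof.
  apply NoDup_map_NoDup_ForallPairs; [intros a b _ _ E; lia | apply seq_NoDup].
Qed.

(* The p + 1 values x^2 and N + D y^2 with 0 <= x, y <= (p - 1) / 2 cannot be
   pairwise distinct modulo p. *)
Lemma binary_form_onto_mod_prime p D N :
  prime p -> p <> 2 -> ~ (p | D) -> exists x y, (p | x ^ 2 - D * y ^ 2 - N).
Proof.
  intros Hp H2 HD. apply NNPP. intro Hno.
  assert (p2 := prime_ge_2 p Hp). assert (Ho := odd_prime_half p Hp H2).
  set (h := (p - 1) / 2) in *.
  set (L1 := map (fun x => (x ^ 2) mod p) (zrange (h + 1))).
  set (L2 := map (fun y => (N + D * y ^ 2) mod p) (zrange (h + 1))).
  assert (Hp1 : ~ (p | 1)) by (intro Q; apply Z.divide_pos_le in Q; lia).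
  assert (ND : NoDup (L1 ++ L2)).
  { apply NoDup_app.
    - apply NoDup_map_NoDup_ForallPairs; [|apply NoDup_zrange].
      intros a b Ha Hb E. apply in_zrange in Ha, Hb.
      apply (sq_mod_prime_inj p 1); auto; try lia.
      replace (1 * a ^ 2 - 1 * b ^ 2) with (a ^ 2 - b ^ 2) by ring.
      apply divide_of_eq_mod; lia.
    - apply NoDup_map_NoDup_ForallPairs; [|apply NoDup_zrange].
      intros a b Ha Hb E. apply in_zrange in Ha, Hb.
      apply (sq_mod_prime_inj p D); auto; try lia.
      replace (D * a ^ 2 - D * b ^ 2) with ((N + D * a ^ 2) - (N + D * b ^ 2)) by ring.
      apply divide_of_eq_mod; lia.
    - intros a Ha Hb. apply in_map_iff in Ha as [x [Ex _]], Hb as [y [Ey _]].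
      apply Hno. exists x, y.
      replace (x ^ 2 - D * y ^ 2 - N) with (x ^ 2 - (N + D * y ^ 2)) by ring.
      apply divide_of_eq_mod; lia. }
  assert (I : incl (L1 ++ L2) (zrange p)).
  { intros a Ha. apply in_zrange.
    apply in_app_or in Ha as [Ha|Ha]; apply in_map_iff in Ha as [x [<- _]];
      apply Z.mod_pos_bound; lia. }
  assert (Le := NoDup_incl_length ND I).
  rewrite length_app in Le. unfold L1, L2 in Le.
  rewrite !length_map, !length_zrange in Le. lia.
Qed.

(** * Hensel lifting *)

Lemma hensel_step p K a b c y :
  prime p -> (1 <= K)%nat -> (ppow p K | a * y ^ 2 + b * y + c) -> ~ (p | 2 * a * y + b) ->
  exists t, (ppow p (S K) | a * (y + t * ppow p K) ^ 2 + b * (y + t * ppow p K) + c).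
Proof.
  intros Hp HK [r Hr] Hd.
  destruct (linear_congruence_solvable p _ r Hp Hd) as [t Ht].
  exists t. rewrite ppow_S. set (q := ppow p K) in *.
  replace (a * (y + t * q) ^ 2 + b * (y + t * q) + c)
    with ((r + t * (2 * a * y + b)) * q + (a * t ^ 2 * q) * q)
    by (transitivity ((a * y ^ 2 + b * y + c) + q * t * (2 * a * y + b) + a * t ^ 2 * q * q);
        [rewrite Hr; ring | ring]).
  apply Z.divide_add_r; apply Z.mul_divide_mono_r; [exact Ht|].
  apply Z.divide_mul_r, divide_ppow, HK.
Qed.

Lemma hensel p (A B C : nat -> Z) x0 :
  prime p -> padic p A -> padic p B -> padic p C ->
  (p | A 1%nat * x0 ^ 2 + B 1%nat * x0 + C 1%nat) ->
  ~ (p | 2 * A 1%nat * x0 + B 1%nat) ->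
  exists x, padic p x /\ forall k, (ppow p k | A k * x k ^ 2 + B k * x k + C k).
Proof.
  intros Hp HA HB HC Hroot Hsimple.
  destruct (padic_of_lifts p
    (fun k y => (ppow p k | A k * y ^ 2 + B k * y + C k) /\ (p | y - x0)) x0)
    as [x [Hx Hk]].
  - rewrite ppow_0, Z.sub_diag. split; [apply Z.divide_1_l | apply Z.divide_0_r].
  - intros [|k] y [Hy Hyx0].
    + exists x0. rewrite ppow_1, ppow_0, Z.sub_diag.
      split; [split; [exact Hroot | apply Z.divide_0_r] | apply Z.divide_1_l].
    + set (K := S k) in *.
      assert (HyK : (ppow p K | A (S K) * y ^ 2 + B (S K) * y + C (S K))).
      { replace (A (S K) * y ^ 2 + B (S K) * y + C (S K)) with
          ((A K * y ^ 2 + B K * y + C K)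
           + ((A (S K) - A K) * y ^ 2 + (B (S K) - B K) * y + (C (S K) - C K))) by ring.
        apply Z.divide_add_r; [exact Hy|].
        apply Z.divide_add_r; [apply Z.divide_add_r|];
          [apply Z.divide_mul_l, HA | apply Z.divide_mul_l, HB | apply HC]. }
      assert (HdK : ~ (p | 2 * A (S K) * y + B (S K))).
      { apply (not_divide_cong p _ (2 * A 1%nat * x0 + B 1%nat)); [|exact Hsimple].
        assert (HA1 := padic_cong1 p A (S K) HA ltac:(lia)).
        assert (HB1 := padic_cong1 p B (S K) HB ltac:(lia)).
        replace (2 * A (S K) * y + B (S K) - (2 * A 1%nat * x0 + B 1%nat)) with
          (2 * y * (A (S K) - A 1%nat) + 2 * A 1%nat * (y - x0) + (B (S K) - B 1%nat)) by ring.
        apply Z.divide_add_r; [apply Z.divide_add_r|]; try apply Z.divide_mul_r; assumption. }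
      destruct (hensel_step p K _ _ _ y Hp ltac:(unfold K; lia) HyK HdK) as [t Ht].
      exists (y + t * ppow p K).
      assert (HpK : (p | t * ppow p K))
        by (apply Z.divide_mul_r, divide_ppow; unfold K; lia).
      split; [split|]; [exact Ht| |].
      * replace (y + t * ppow p K - x0) with ((y - x0) + t * ppow p K) by ring.
        apply Z.divide_add_r; assumption.
      * replace (y + t * ppow p K - y) with (t * ppow p K) by ring. apply Z.divide_factor_r.
  - exists x. split; [exact Hx | intro k; apply Hk].
Qed.

Lemma padic_inverse p c :
  prime p -> ~ (p | c) -> exists ci, padic p ci /\ forall k, (ppow p k | c * ci k - 1).
Proof.
  intros Hp Hc. destruct (linear_congruence_solvable p c (-1) Hp Hc) as [x0 Hx0].
  destruct (hensel p (fun _ => 0) (fun _ => c) (fun _ => -1) x0 Hp) as [x [Hx Hk]];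
    try apply padic_const.
  - replace (0 * x0 ^ 2 + c * x0 + -1) with (-1 + x0 * c) by ring. exact Hx0.
  - replace (2 * 0 * x0 + c) with c by ring. exact Hc.
  - exists x. split; [exact Hx|]. intro k.
    replace (c * x k - 1) with (0 * x k ^ 2 + c * x k + -1) by ring. apply Hk.
Qed.

(** * From the lattice J to the polynomial g *)

Lemma divide_sq_sub m a u y : (m | u - y) -> (m | a * u ^ 2 - a * y ^ 2).
Proof.
  intros H. replace (a * u ^ 2 - a * y ^ 2) with (a * (u + y) * (u - y)) by ring.
  apply Z.divide_mul_r, H.
Qed.

(* Away from c, the substitution x_i = (y_i - al_i) / c turns J into g. *)
Lemma rep_Zp_of_QJ p c a1 a2 a3 al1 al2 al3 N y1 y2 y3 :
  prime p -> ~ (p | c) -> padic p y1 -> padic p y2 -> padic p y3 ->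
  (forall k, (ppow p k | QJ a1 a2 a3 (y1 k) (y2 k) (y3 k) - N)) ->
  rep_Zp (CQP c a1 a2 a3 al1 al2 al3) p N.
Proof.
  intros Hp Hc H1 H2 H3 HQ.
  destruct (padic_inverse p c Hp Hc) as [ci [Hci Hinv]].
  exists (fun k => ci k * (y1 k - al1)), (fun k => ci k * (y2 k - al2)),
    (fun k => ci k * (y3 k - al3)).
  repeat split; try (apply padic_mul; [exact Hci | apply padic_sub; auto using padic_const]).
  intro k. unfold gZ; cbn [qa1 qa2 qa3 qc qal1 qal2 qal3].
  assert (E : forall y al, (ppow p k | c * (ci k * (y - al)) + al - y)).
  { intros y al. replace (c * (ci k * (y - al)) + al - y) with ((c * ci k - 1) * (y - al))
      by ring.
    apply Z.divide_mul_l, Hinv. }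
  match goal with |- (_ | ?X) => replace X with
    ((a1 * (c * (ci k * (y1 k - al1)) + al1) ^ 2 - a1 * y1 k ^ 2) +
     (a2 * (c * (ci k * (y2 k - al2)) + al2) ^ 2 - a2 * y2 k ^ 2) +
     (a3 * (c * (ci k * (y3 k - al3)) + al3) ^ 2 - a3 * y3 k ^ 2) +
     (QJ a1 a2 a3 (y1 k) (y2 k) (y3 k) - N)) by (unfold QJ; ring) end.
  apply Z.divide_add_r; [apply Z.divide_add_r; [apply Z.divide_add_r|]|];
    [apply divide_sq_sub, E .. | apply HQ].
Qed.

Lemma QJ_lin_comb2 a1 a2 a3 s t v1 v2 v3 w1 w2 w3 :
  QJ a1 a2 a3 (s * v1 + t * w1) (s * v2 + t * w2) (s * v3 + t * w3)
  = s ^ 2 * QJ a1 a2 a3 v1 v2 v3 + t ^ 2 * QJ a1 a2 a3 w1 w2 w3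
    + 2 * s * t * BJ a1 a2 a3 v1 v2 v3 w1 w2 w3.
Proof. unfold QJ, BJ. ring. Qed.

Lemma QJ_lin_comb3 a1 a2 a3 z1 z2 z3 e11 e12 e13 e21 e22 e23 e31 e32 e33 :
  QJ a1 a2 a3 (z1 * e11 + z2 * e21 + z3 * e31) (z1 * e12 + z2 * e22 + z3 * e32)
    (z1 * e13 + z2 * e23 + z3 * e33)
  = z1 ^ 2 * QJ a1 a2 a3 e11 e12 e13 + z2 ^ 2 * QJ a1 a2 a3 e21 e22 e23
    + z3 ^ 2 * QJ a1 a2 a3 e31 e32 e33
    + 2 * z1 * z2 * BJ a1 a2 a3 e11 e12 e13 e21 e22 e23
    + 2 * z1 * z3 * BJ a1 a2 a3 e11 e12 e13 e31 e32 e33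
    + 2 * z2 * z3 * BJ a1 a2 a3 e21 e22 e23 e31 e32 e33.
Proof. unfold QJ, BJ. ring. Qed.

(* N = s^2 - t^2 with s = (N + 1) / 2 and t = (N - 1) / 2. *)
Lemma rep_Zp_of_hyperbolic p c a1 a2 a3 al1 al2 al3 N :
  prime p -> p <> 2 -> ~ (p | c) -> represents_binary p a1 a2 a3 1 (-1) ->
  rep_Zp (CQP c a1 a2 a3 al1 al2 al3) p N.
Proof.
  intros Hp H2 Hc [v1 [v2 [v3 [w1 [w2 [w3 [Hv1 [Hv2 [Hv3 [Hw1 [Hw2 [Hw3 HK]]]]]]]]]]]].
  destruct (padic_inverse p 2 Hp (prime_not_divide_2 p Hp H2)) as [h [Hh Hhalf]].
  set (s := fun k => h k * (N + 1)). set (t := fun k => h k * (N - 1)).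
  assert (Hs : padic p s) by (apply padic_mul; auto using padic_const).
  assert (Ht : padic p t) by (apply padic_mul; auto using padic_const).
  apply (rep_Zp_of_QJ p c a1 a2 a3 al1 al2 al3 N
    (fun k => s k * v1 k + t k * w1 k) (fun k => s k * v2 k + t k * w2 k)
    (fun k => s k * v3 k + t k * w3 k)); auto;
    try (apply padic_add; apply padic_mul; assumption).
  intro k. rewrite QJ_lin_comb2. destruct (HK k) as [Q1 [Q2 B12]].
  replace (s k ^ 2 * QJ a1 a2 a3 (v1 k) (v2 k) (v3 k) + t k ^ 2 * QJ a1 a2 a3 (w1 k) (w2 k) (w3 k)
           + 2 * s k * t k * BJ a1 a2 a3 (v1 k) (v2 k) (v3 k) (w1 k) (w2 k) (w3 k) - N)
    with (s k ^ 2 * (QJ a1 a2 a3 (v1 k) (v2 k) (v3 k) - 1)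
          + t k ^ 2 * (QJ a1 a2 a3 (w1 k) (w2 k) (w3 k) - -1)
          + 2 * s k * t k * BJ a1 a2 a3 (v1 k) (v2 k) (v3 k) (w1 k) (w2 k) (w3 k)
          + N * (2 * h k + 1) * (2 * h k - 1)) by (unfold s, t; ring).
  apply Z.divide_add_r; [apply Z.divide_add_r; [apply Z.divide_add_r|]|];
    apply Z.divide_mul_r; [exact Q1 | exact Q2 | exact B12 | apply Hhalf].
Qed.

Lemma square_term_lift p c a al D :
  prime p -> p <> 2 -> (p | c) -> ~ (p | a) -> ~ (p | al) ->
  exists x, padic p x /\ forall k, (ppow p k | a * (c * x k + al) ^ 2 - (a * al ^ 2 + c * D)).
Proof.
  intros Hp H2 Hc Ha Hal.
  assert (Hu : ~ (p | 2 * a * al)).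
  { rewrite <- Z.mul_assoc.
    apply prime_not_divide_mul, prime_not_divide_mul; auto using prime_not_divide_2. }
  destruct (linear_congruence_solvable p (2 * a * al) (- D) Hp Hu) as [t Ht].
  destruct (hensel p (fun _ => a * c) (fun _ => 2 * a * al) (fun _ => - D) t Hp)
    as [x [Hx Hk]]; try apply padic_const.
  - replace (a * c * t ^ 2 + 2 * a * al * t + - D)
      with (c * (a * t ^ 2) + (- D + t * (2 * a * al))) by ring.
    apply Z.divide_add_r; [apply Z.divide_mul_l|]; assumption.
  - apply (not_divide_cong p _ (2 * a * al)); [|exact Hu].
    replace (2 * (a * c) * t + 2 * a * al - 2 * a * al) with (c * (2 * a * t)) by ring.
    apply Z.divide_mul_l, Hc.
  - exists x. split; [exact Hx|]. intro k.
    replace (a * (c * x k + al) ^ 2 - (a * al ^ 2 + c * D))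
      with (c * (a * c * x k ^ 2 + 2 * a * al * x k + - D)) by ring.
    apply Z.divide_mul_r, Hk.
Qed.

(* At p | c it suffices to move a single coordinate whose coefficient is a unit. *)
Lemma rep_Zp_of_divide_c p c a1 a2 a3 al1 al2 al3 D :
  prime p -> p <> 2 -> (p | c) -> (~ (p | a1) \/ ~ (p | a2) \/ ~ (p | a3)) ->
  ~ (p | al1) -> ~ (p | al2) -> ~ (p | al3) ->
  rep_Zp (CQP c a1 a2 a3 al1 al2 al3) p (a1 * al1 ^ 2 + a2 * al2 ^ 2 + a3 * al3 ^ 2 + c * D).
Proof.
  intros Hp H2 Hc Ha Hal1 Hal2 Hal3.
  destruct Ha as [Ha|[Ha|Ha]].
  - destruct (square_term_lift p c a1 al1 D Hp H2 Hc Ha Hal1) as [x [Hx Hk]].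
    exists x, (fun _ => 0), (fun _ => 0). repeat split; auto using padic_const.
    intro k. unfold gZ; cbn [qa1 qa2 qa3 qc qal1 qal2 qal3].
    replace (a1 * (c * x k + al1) ^ 2 + a2 * (c * 0 + al2) ^ 2 + a3 * (c * 0 + al3) ^ 2
             - (a1 * al1 ^ 2 + a2 * al2 ^ 2 + a3 * al3 ^ 2 + c * D))
      with (a1 * (c * x k + al1) ^ 2 - (a1 * al1 ^ 2 + c * D)) by ring.
    apply Hk.
  - destruct (square_term_lift p c a2 al2 D Hp H2 Hc Ha Hal2) as [x [Hx Hk]].
    exists (fun _ => 0), x, (fun _ => 0). repeat split; auto using padic_const.
    intro k. unfold gZ; cbn [qa1 qa2 qa3 qc qal1 qal2 qal3].
    replace (a1 * (c * 0 + al1) ^ 2 + a2 * (c * x k + al2) ^ 2 + a3 * (c * 0 + al3) ^ 2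
             - (a1 * al1 ^ 2 + a2 * al2 ^ 2 + a3 * al3 ^ 2 + c * D))
      with (a2 * (c * x k + al2) ^ 2 - (a2 * al2 ^ 2 + c * D)) by ring.
    apply Hk.
  - destruct (square_term_lift p c a3 al3 D Hp H2 Hc Ha Hal3) as [x [Hx Hk]].
    exists (fun _ => 0), (fun _ => 0), x. repeat split; auto using padic_const.
    intro k. unfold gZ; cbn [qa1 qa2 qa3 qc qal1 qal2 qal3].
    replace (a1 * (c * 0 + al1) ^ 2 + a2 * (c * 0 + al2) ^ 2 + a3 * (c * x k + al3) ^ 2
             - (a1 * al1 ^ 2 + a2 * al2 ^ 2 + a3 * al3 ^ 2 + c * D))
      with (a3 * (c * x k + al3) ^ 2 - (a3 * al3 ^ 2 + c * D)) by ring.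
    apply Hk.
Qed.

(** * The ternary form x^2 - D y^2 + p eps z^2 *)

(* With [e = true] and [w = eps], these are the only values that
   x^2 - D y^2 + p eps z^2 can fail to represent over Z_p. *)
Definition exceptional (p w : Z) (e : bool) (N : Z) : Prop :=
  exists r M, N = p ^ Z.of_nat r * M /\ ~ (p | M) /\ Nat.odd r = e /\
    ~ (exists z, (p | w * z ^ 2 - M)).

Lemma exceptional_mul_p p w e N :
  prime p -> (exceptional p w e (p * N) <-> exceptional p w (negb e) N).
Proof.
  intros Hp. assert (p2 := prime_ge_2 p Hp). split.
  - intros [[|r] [M [E [HM [Ho Hn]]]]].
    + exfalso. apply HM. rewrite Z.mul_1_l in E. exists N. lia.
    + exists r, M. rewrite Nat2Z.inj_succ, Z.pow_succ_r in E by lia.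
      repeat split; auto.
      * apply (Z.mul_reg_l _ _ p); lia.
      * rewrite <- Ho, Nat.odd_succ, <- Nat.negb_odd, Bool.negb_involutive. reflexivity.
  - intros [r [M [E [HM [Ho Hn]]]]]. exists (S r), M.
    rewrite Nat2Z.inj_succ, Z.pow_succ_r by lia. repeat split; auto.
    + rewrite E. ring.
    + rewrite Nat.odd_succ, <- Nat.negb_odd, Ho. destruct e; reflexivity.
Qed.

Lemma exceptional_unit p w e N :
  ~ (p | N) -> (exceptional p w e N <-> e = false /\ ~ (exists z, (p | w * z ^ 2 - N))).
Proof.
  intros HN. split.
  - intros [[|r] [M [E [HM [Ho Hn]]]]].
    + rewrite Z.mul_1_l in E. subst M. auto.
    + exfalso. apply HN. rewrite E, Nat2Z.inj_succ, Z.pow_succ_r by lia.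
      exists (p ^ Z.of_nat r * M). ring.
  - intros [-> Hn]. exists 0%nat, N. repeat split; auto. symmetry. apply Z.mul_1_l.
Qed.

Definition rep_Zp_diag (p D : Z) (eps : nat -> Z) (N : Z) : Prop :=
  exists z1 z2 z3, padic p z1 /\ padic p z2 /\ padic p z3 /\
    forall k, (ppow p k | z1 k ^ 2 - D * z2 k ^ 2 + p * eps k * z3 k ^ 2 - N).

Lemma rep_Zp_diag_0 p D eps : rep_Zp_diag p D eps 0.
Proof.
  exists (fun _ => 0), (fun _ => 0), (fun _ => 0). repeat split; try apply padic_const.
  intro k. replace (0 ^ 2 - D * 0 ^ 2 + p * eps k * 0 ^ 2 - 0) with 0 by ring.
  apply Z.divide_0_r.
Qed.

Lemma rep_Zp_diag_mul_p2 p D eps N : rep_Zp_diag p D eps N -> rep_Zp_diag p D eps (p * (p * N)).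
Proof.
  intros [z1 [z2 [z3 [H1 [H2 [H3 Hk]]]]]].
  exists (fun k => p * z1 k), (fun k => p * z2 k), (fun k => p * z3 k).
  repeat split; try (apply padic_mul; auto using padic_const).
  intro k.
  replace ((p * z1 k) ^ 2 - D * (p * z2 k) ^ 2 + p * eps k * (p * z3 k) ^ 2 - p * (p * N))
    with ((p * p) * (z1 k ^ 2 - D * z2 k ^ 2 + p * eps k * z3 k ^ 2 - N)) by ring.
  apply Z.divide_mul_r, Hk.
Qed.

(* Lift a solution of x^2 - D y^2 = N mod p in the coordinate that is a unit. *)
Lemma rep_Zp_diag_unit p D eps N :
  prime p -> p <> 2 -> ~ (p | D) -> ~ (p | N) -> rep_Zp_diag p D eps N.
Proof.
  intros Hp H2 HD HN.
  destruct (binary_form_onto_mod_prime p D N Hp H2 HD) as [x [y Hxy]].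
  destruct (classic (p | x)) as [Px|Px].
  - assert (Py : ~ (p | y)).
    { intro Py. apply HN. replace N with (x * x - D * y * y - (x ^ 2 - D * y ^ 2 - N)) by ring.
      apply Z.divide_sub_r; auto. apply Z.divide_sub_r; apply Z.divide_mul_r; auto. }
    destruct (hensel p (fun _ => D) (fun _ => 0) (fun _ => N - x ^ 2) y Hp)
      as [z [Hz Hk]]; try apply padic_const.
    + replace (D * y ^ 2 + 0 * y + (N - x ^ 2)) with (- (x ^ 2 - D * y ^ 2 - N)) by ring.
      apply Z.divide_opp_r, Hxy.
    + replace (2 * D * y + 0) with (2 * (D * y)) by ring.
      apply prime_not_divide_mul, prime_not_divide_mul; auto using prime_not_divide_2.
    + exists (fun _ => x), z, (fun _ => 0). repeat split; auto using padic_const.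
      intro k.
      replace (x ^ 2 - D * z k ^ 2 + p * eps k * 0 ^ 2 - N)
        with (- (D * z k ^ 2 + 0 * z k + (N - x ^ 2))) by ring.
      apply Z.divide_opp_r, Hk.
  - destruct (hensel p (fun _ => 1) (fun _ => 0) (fun _ => - (N + D * y ^ 2)) x Hp)
      as [z [Hz Hk]]; try apply padic_const.
    + replace (1 * x ^ 2 + 0 * x + - (N + D * y ^ 2)) with (x ^ 2 - D * y ^ 2 - N) by ring.
      exact Hxy.
    + replace (2 * 1 * x + 0) with (2 * x) by ring.
      apply prime_not_divide_mul; auto using prime_not_divide_2.
    + exists z, (fun _ => y), (fun _ => 0). repeat split; auto using padic_const.
      intro k.
      replace (z k ^ 2 - D * y ^ 2 + p * eps k * 0 ^ 2 - N)
        with (1 * z k ^ 2 + 0 * z k + - (N + D * y ^ 2)) by ring.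
      apply Hk.
Qed.

Lemma rep_Zp_diag_p_unit p D eps N z0 :
  prime p -> p <> 2 -> padic p eps -> ~ (p | N) -> (p | eps 1%nat * z0 ^ 2 - N) ->
  rep_Zp_diag p D eps (p * N).
Proof.
  intros Hp H2 He HN Hz0.
  assert (Hez : ~ (p | eps 1%nat * z0)).
  { intro Pz. apply HN. replace N with (eps 1%nat * z0 * z0 - (eps 1%nat * z0 ^ 2 - N)) by ring.
    apply Z.divide_sub_r; [apply Z.divide_mul_l|]; assumption. }
  destruct (hensel p eps (fun _ => 0) (fun _ => - N) z0 Hp) as [z [Hz Hk]];
    auto; try apply padic_const.
  - replace (eps 1%nat * z0 ^ 2 + 0 * z0 + - N) with (eps 1%nat * z0 ^ 2 - N) by ring.
    exact Hz0.
  - replace (2 * eps 1%nat * z0 + 0) with (2 * (eps 1%nat * z0)) by ring.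
    apply prime_not_divide_mul; auto using prime_not_divide_2.
  - exists (fun _ => 0), (fun _ => 0), z. repeat split; auto using padic_const.
    intro k.
    replace (0 ^ 2 - D * 0 ^ 2 + p * eps k * z k ^ 2 - p * N)
      with (p * (eps k * z k ^ 2 + 0 * z k + - N)) by ring.
    apply Z.divide_mul_r, Hk.
Qed.

(* Induction on |N|, peeling off factors p: the parity flag records whether an
   odd or an even power of p is still to be removed. *)
Lemma rep_Zp_diag_of_not_exceptional p D eps N :
  prime p -> p <> 2 -> ~ (p | D) -> padic p eps ->
  (~ exceptional p (eps 1%nat) true N -> rep_Zp_diag p D eps N) /\
  (~ exceptional p (eps 1%nat) false N -> rep_Zp_diag p D eps (p * N)).
Proof.
  intros Hp H2 HD He. assert (p2 := prime_ge_2 p Hp).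
  remember (Z.abs_nat N) as M eqn:HM. revert N HM.
  induction M as [M IH] using lt_wf_ind. intros N HM.
  destruct (Z.eq_dec N 0) as [->|N0].
  { rewrite Z.mul_0_r. split; intros; apply rep_Zp_diag_0. }
  destruct (classic (p | N)) as [[q ->]|PN].
  - assert (Hlt : (Z.abs_nat q < M)%nat) by (subst; rewrite Zabs2Nat.inj_mul; nia).
    destruct (IH _ Hlt q eq_refl) as [IH1 IH2].
    rewrite Z.mul_comm. split; intro HB; rewrite exceptional_mul_p in HB by exact Hp.
    + apply IH2, HB.
    + apply rep_Zp_diag_mul_p2, IH1, HB.
  - split; intro HB.
    + apply rep_Zp_diag_unit; assumption.
    + rewrite exceptional_unit in HB by exact PN.
      destruct (classic (exists z, (p | eps 1%nat * z ^ 2 - N))) as [[z Hz]|Hn];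
        [|tauto].
      apply (rep_Zp_diag_p_unit p D eps N z); assumption.
Qed.

Lemma diag_form_divide_step p D e y1 y2 y3 :
  prime p -> nonsquare_unit p D -> ~ (p | e) ->
  (p * p | y1 ^ 2 - D * y2 ^ 2 + p * e * y3 ^ 2) -> (p | y1) /\ (p | y2) /\ (p | y3).
Proof.
  intros Hp [_ Hns] He H. assert (p2 := prime_ge_2 p Hp).
  assert (H12 : (p | y1 ^ 2 - D * y2 ^ 2)).
  { replace (y1 ^ 2 - D * y2 ^ 2)
      with ((y1 ^ 2 - D * y2 ^ 2 + p * e * y3 ^ 2) - p * (e * y3 ^ 2)) by ring.
    apply Z.divide_sub_r; [|apply Z.divide_factor_l].
    apply Z.divide_trans with (p * p); [apply Z.divide_factor_l | exact H]. }
  assert (Py2 : (p | y2)).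
  { apply NNPP. intro Py2.
    destruct (linear_congruence_solvable p y2 (-1) Hp Py2) as [v Hv].
    (* otherwise y1 / y2 would be a square root of D *)
    apply (Hns (y1 * v)).
    replace ((y1 * v) ^ 2 - D)
      with (v ^ 2 * (y1 ^ 2 - D * y2 ^ 2) + D * (-1 + v * y2) * (v * y2 + 1)) by ring.
    apply Z.divide_add_r; [apply Z.divide_mul_r, H12|].
    apply Z.divide_mul_l, Z.divide_mul_r, Hv. }
  assert (Py1 : (p | y1)).
  { assert (Q : (p | y1 * y1)).
    { replace (y1 * y1) with ((y1 ^ 2 - D * y2 ^ 2) + D * y2 * y2) by ring.
      apply Z.divide_add_r; [exact H12 | apply Z.divide_mul_r, Py2]. }
    destruct (prime_mult p Hp _ _ Q); assumption. }
  split; [exact Py1|]. split; [exact Py2|].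
  destruct Py1 as [u1 ->], Py2 as [u2 ->].
  assert (Q : (p * p | p * (e * y3 ^ 2))).
  { replace (p * (e * y3 ^ 2)) with
      ((u1 * p) ^ 2 - D * (u2 * p) ^ 2 + p * e * y3 ^ 2 - p * p * (u1 ^ 2 - D * u2 ^ 2))
      by ring.
    apply Z.divide_sub_r; [exact H | apply Z.divide_factor_l]. }
  apply Z.mul_divide_cancel_l in Q; [|lia].
  destruct (prime_mult p Hp _ _ Q) as [Q1|Q1]; [contradiction|].
  rewrite Z.pow_2_r in Q1. destruct (prime_mult p Hp _ _ Q1); assumption.
Qed.

Lemma diag_form_descent p D e :
  prime p -> nonsquare_unit p D -> ~ (p | e) ->
  forall j y1 y2 y3, (ppow p (2 * j) | y1 ^ 2 - D * y2 ^ 2 + p * e * y3 ^ 2) ->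
  (ppow p j | y1) /\ (ppow p j | y2) /\ (ppow p j | y3).
Proof.
  intros Hp HD He. assert (p2 := prime_ge_2 p Hp).
  induction j as [|j IH]; intros y1 y2 y3 H.
  { rewrite ppow_0. repeat split; apply Z.divide_1_l. }
  assert (Hpp : ppow p (2 * S j) = p * p * ppow p (2 * j)).
  { replace (2 * S j)%nat with (S (S (2 * j))) by lia. rewrite !ppow_S. ring. }
  rewrite Hpp in H.
  destruct (diag_form_divide_step p D e y1 y2 y3 Hp HD He)
    as [[u1 ->] [[u2 ->] [u3 ->]]].
  { apply Z.divide_trans with (p * p * ppow p (2 * j)); [apply Z.divide_factor_l | exact H]. }
  destruct (IH u1 u2 u3) as [D1 [D2 D3]].
  { apply (Z.mul_divide_cancel_l _ _ (p * p)); [lia|].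
    replace (p * p * (u1 ^ 2 - D * u2 ^ 2 + p * e * u3 ^ 2))
      with ((u1 * p) ^ 2 - D * (u2 * p) ^ 2 + p * e * (u3 * p) ^ 2) by ring.
    exact H. }
  rewrite ppow_S. repeat split; rewrite (Z.mul_comm p); apply Z.mul_divide_mono_r; assumption.
Qed.

(* Zdiv declares these morphisms but does not make them available to setoid rewriting. *)
#[local] Existing Instances eqm_setoid Zplus_eqm Zminus_eqm Zmult_eqm.

Lemma det3_eqm m x1 x2 x3 y1 y2 y3 z1 z2 z3 x1' x2' x3' y1' y2' y3' z1' z2' z3' :
  eqm m x1 x1' -> eqm m x2 x2' -> eqm m x3 x3' ->
  eqm m y1 y1' -> eqm m y2 y2' -> eqm m y3 y3' ->
  eqm m z1 z1' -> eqm m z2 z2' -> eqm m z3 z3' ->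
  eqm m (det3 x1 x2 x3 y1 y2 y3 z1 z2 z3) (det3 x1' x2' x3' y1' y2' y3' z1' z2' z3').
Proof.
  intros H1 H2 H3 H4 H5 H6 H7 H8 H9. unfold det3.
  setoid_rewrite H1; setoid_rewrite H2; setoid_rewrite H3; setoid_rewrite H4;
    setoid_rewrite H5; setoid_rewrite H6; setoid_rewrite H7; setoid_rewrite H8;
    setoid_rewrite H9; reflexivity.
Qed.

Section Isometric.

Variables (p a1 a2 a3 D : Z) (e11 e12 e13 e21 e22 e23 e31 e32 e33 eps : nat -> Z).
Hypothesis Hp : prime p.
Hypotheses (P11 : padic p e11) (P12 : padic p e12) (P13 : padic p e13)
  (P21 : padic p e21) (P22 : padic p e22) (P23 : padic p e23)
  (P31 : padic p e31) (P32 : padic p e32) (P33 : padic p e33) (Peps : padic p eps).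
Hypothesis Horth : forall k : nat,
  (ppow p k | QJ a1 a2 a3 (e11 k) (e12 k) (e13 k) - 1) /\
  (ppow p k | QJ a1 a2 a3 (e21 k) (e22 k) (e23 k) + D) /\
  (ppow p k | QJ a1 a2 a3 (e31 k) (e32 k) (e33 k) - p * eps k) /\
  (ppow p k | BJ a1 a2 a3 (e11 k) (e12 k) (e13 k) (e21 k) (e22 k) (e23 k)) /\
  (ppow p k | BJ a1 a2 a3 (e11 k) (e12 k) (e13 k) (e31 k) (e32 k) (e33 k)) /\
  (ppow p k | BJ a1 a2 a3 (e21 k) (e22 k) (e23 k) (e31 k) (e32 k) (e33 k)).

Lemma QJ_in_basis k z1 z2 z3 :
  (ppow p k | QJ a1 a2 a3 (z1 * e11 k + z2 * e21 k + z3 * e31 k)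
                (z1 * e12 k + z2 * e22 k + z3 * e32 k) (z1 * e13 k + z2 * e23 k + z3 * e33 k)
              - (z1 ^ 2 - D * z2 ^ 2 + p * eps k * z3 ^ 2)).
Proof.
  rewrite QJ_lin_comb3. destruct (Horth k) as [Q1 [Q2 [Q3 [B12 [B13 B23]]]]].
  match goal with |- (_ | ?X) => replace X with
    (z1 ^ 2 * (QJ a1 a2 a3 (e11 k) (e12 k) (e13 k) - 1)
     + z2 ^ 2 * (QJ a1 a2 a3 (e21 k) (e22 k) (e23 k) + D)
     + z3 ^ 2 * (QJ a1 a2 a3 (e31 k) (e32 k) (e33 k) - p * eps k)
     + 2 * z1 * z2 * BJ a1 a2 a3 (e11 k) (e12 k) (e13 k) (e21 k) (e22 k) (e23 k)
     + 2 * z1 * z3 * BJ a1 a2 a3 (e11 k) (e12 k) (e13 k) (e31 k) (e32 k) (e33 k)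
     + 2 * z2 * z3 * BJ a1 a2 a3 (e21 k) (e22 k) (e23 k) (e31 k) (e32 k) (e33 k)) by ring end.
  repeat apply Z.divide_add_r; apply Z.divide_mul_r; assumption.
Qed.

Lemma rep_Zp_of_isometric c al1 al2 al3 N :
  ~ (p | c) -> rep_Zp_diag p D eps N -> rep_Zp (CQP c a1 a2 a3 al1 al2 al3) p N.
Proof.
  intros Hc [z1 [z2 [z3 [Z1 [Z2 [Z3 Hz]]]]]].
  apply (rep_Zp_of_QJ p c a1 a2 a3 al1 al2 al3 N
    (fun k => z1 k * e11 k + z2 k * e21 k + z3 k * e31 k)
    (fun k => z1 k * e12 k + z2 k * e22 k + z3 k * e32 k)
    (fun k => z1 k * e13 k + z2 k * e23 k + z3 k * e33 k)); auto;
    try (apply padic_add; [apply padic_add|]; apply padic_mul; assumption).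
  intro k.
  match goal with |- (_ | ?X - N) =>
    replace (X - N) with ((X - (z1 k ^ 2 - D * z2 k ^ 2 + p * eps k * z3 k ^ 2))
                          + (z1 k ^ 2 - D * z2 k ^ 2 + p * eps k * z3 k ^ 2 - N)) by ring end.
  apply Z.divide_add_r; [apply QJ_in_basis | apply Hz].
Qed.

Lemma diag_form_of_coords K d x1 x2 x3 y1 y2 y3 :
  y1 * e11 K + y2 * e21 K + y3 * e31 K = d * x1 ->
  y1 * e12 K + y2 * e22 K + y3 * e32 K = d * x2 ->
  y1 * e13 K + y2 * e23 K + y3 * e33 K = d * x3 ->
  (ppow p K | QJ a1 a2 a3 x1 x2 x3) -> (ppow p K | y1 ^ 2 - D * y2 ^ 2 + p * eps K * y3 ^ 2).
Proof.
  intros I1 I2 I3 HQ.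
  assert (E : QJ a1 a2 a3 (d * x1) (d * x2) (d * x3) = d ^ 2 * QJ a1 a2 a3 x1 x2 x3)
    by (unfold QJ; ring).
  rewrite <- I1, <- I2, <- I3 in E.
  replace (y1 ^ 2 - D * y2 ^ 2 + p * eps K * y3 ^ 2) with
    (d ^ 2 * QJ a1 a2 a3 x1 x2 x3
     - (QJ a1 a2 a3 (y1 * e11 K + y2 * e21 K + y3 * e31 K)
          (y1 * e12 K + y2 * e22 K + y3 * e32 K) (y1 * e13 K + y2 * e23 K + y3 * e33 K)
        - (y1 ^ 2 - D * y2 ^ 2 + p * eps K * y3 ^ 2))) by (rewrite E; ring).
  apply Z.divide_sub_r; [apply Z.divide_mul_r, HQ | apply QJ_in_basis].
Qed.

Hypothesis HD : nonsquare_unit p D.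
Hypothesis Heps : padic_unit p eps.
Hypothesis Hdet : ~ (p | det3 (e11 1%nat) (e12 1%nat) (e13 1%nat) (e21 1%nat) (e22 1%nat)
                                (e23 1%nat) (e31 1%nat) (e32 1%nat) (e33 1%nat)).

Lemma det_unit K : (1 <= K)%nat ->
  ~ (p | det3 (e11 K) (e12 K) (e13 K) (e21 K) (e22 K) (e23 K) (e31 K) (e32 K) (e33 K)).
Proof.
  intros HK Pd. assert (p2 := prime_ge_2 p Hp).
  assert (cong1 : forall e, padic p e -> eqm p (e K) (e 1%nat)).
  { intros e Pe. apply eqm_of_divide; [lia | apply padic_cong1; assumption]. }
  apply Hdet, Zmod_divide; [lia|].
  rewrite <- (Zdivide_mod _ _ Pd). symmetry. apply det3_eqm; apply cong1; assumption.
Qed.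

(* By Cramer's rule det(e) x has coordinates y in the basis e; the descent for
   x^2 - D y^2 + p eps z^2 then shows that a zero of J is divisible by every p^j. *)
Lemma isotropic_vector_divisible x1 x2 x3 :
  padic p x1 -> padic p x2 -> padic p x3 ->
  (forall k, (ppow p k | QJ a1 a2 a3 (x1 k) (x2 k) (x3 k))) ->
  forall j, (ppow p j | x1 j) /\ (ppow p j | x2 j) /\ (ppow p j | x3 j).
Proof.
  intros X1 X2 X3 HQ [|j].
  { rewrite ppow_0. repeat split; apply Z.divide_1_l. }
  set (K := (2 * S j)%nat).
  set (d := det3 (e11 K) (e12 K) (e13 K) (e21 K) (e22 K) (e23 K) (e31 K) (e32 K) (e33 K)).
  set (y1 := det3 (x1 K) (x2 K) (x3 K) (e21 K) (e22 K) (e23 K) (e31 K) (e32 K) (e33 K)).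
  set (y2 := det3 (e11 K) (e12 K) (e13 K) (x1 K) (x2 K) (x3 K) (e31 K) (e32 K) (e33 K)).
  set (y3 := det3 (e11 K) (e12 K) (e13 K) (e21 K) (e22 K) (e23 K) (x1 K) (x2 K) (x3 K)).
  assert (I1 : y1 * e11 K + y2 * e21 K + y3 * e31 K = d * x1 K)
    by (unfold y1, y2, y3, d, det3; ring).
  assert (I2 : y1 * e12 K + y2 * e22 K + y3 * e32 K = d * x2 K)
    by (unfold y1, y2, y3, d, det3; ring).
  assert (I3 : y1 * e13 K + y2 * e23 K + y3 * e33 K = d * x3 K)
    by (unfold y1, y2, y3, d, det3; ring).
  assert (HeK : ~ (p | eps K)).
  { apply (not_divide_cong p _ (eps 1%nat)); [apply padic_cong1; [exact Peps | unfold K; lia]|].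
    exact Heps. }
  destruct (diag_form_descent p D (eps K) Hp HD HeK (S j) y1 y2 y3
              (diag_form_of_coords K d _ _ _ y1 y2 y3 I1 I2 I3 (HQ K))) as [D1 [D2 D3]].
  assert (Hcop : rel_prime (ppow p (S j)) d).
  { apply rel_prime_sym, rel_prime_Zpower_r; [lia|].
    apply rel_prime_sym, prime_rel_prime; [exact Hp | apply det_unit; unfold K; lia]. }
  assert (cancel : forall x, padic p x -> (ppow p (S j) | d * x K) -> (ppow p (S j) | x (S j))).
  { intros x Px Hx. apply Gauss in Hx; [|exact Hcop].
    replace (x (S j)) with (x K - (x K - x (S j))) by ring.
    apply Z.divide_sub_r; [exact Hx | apply padic_cong; [exact Px | unfold K; lia]]. }
  repeat split; apply cancel; try assumption;
    [rewrite <- I1 | rewrite <- I2 | rewrite <- I3];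
    repeat apply Z.divide_add_r; apply Z.divide_mul_l; assumption.
Qed.

Lemma anisotropic_of_isometric : anisotropic p a1 a2 a3.
Proof.
  intros [x1 [x2 [x3 [X1 [X2 [X3 [Hnz HQ]]]]]]].
  assert (All := isotropic_vector_divisible x1 x2 x3 X1 X2 X3 HQ).
  destruct Hnz as [[k Hk]|[[k Hk]|[k Hk]]]; apply Hk, All.
Qed.

End Isometric.

Lemma stable_odd_cases p c a1 a2 a3 al1 al2 al3 :
  prime p -> p <> 2 -> ~ (p | c) -> stable_odd p a1 a2 a3 ->
  (forall N, rep_Zp (CQP c a1 a2 a3 al1 al2 al3) p N) \/
  (anisotropic p a1 a2 a3 /\
   exists w, ~ (p | w) /\
     forall N, ~ exceptional p w true N -> rep_Zp (CQP c a1 a2 a3 al1 al2 al3) p N).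
Proof.
  intros Hp H2 Hc [Hhyp|[D [HD Hiso]]].
  - left. intro N. apply rep_Zp_of_hyperbolic; assumption.
  - right.
    destruct Hiso as [e11 [e12 [e13 [e21 [e22 [e23 [e31 [e32 [e33 [eps [P11 [P12 [P13
      [P21 [P22 [P23 [P31 [P32 [P33 [Peps [Heps [Hdet Horth]]]]]]]]]]]]]]]]]]]]]].
    split;
      [apply (anisotropic_of_isometric p a1 a2 a3 D e11 e12 e13 e21 e22 e23 e31 e32 e33 eps);
       assumption|].
    exists (eps 1%nat). split; [exact Heps|]. intros N HN.
    apply (rep_Zp_of_isometric p a1 a2 a3 D e11 e12 e13 e21 e22 e23 e31 e32 e33 eps);
      try assumption.
    apply (rep_Zp_diag_of_not_exceptional p D eps N Hp H2 (proj1 HD) Peps), HN.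
Qed.

(** * Exceptional values in arithmetic progressions *)

Definition decide_prop (P : Prop) : bool :=
  if excluded_middle_informative P then true else false.

Lemma decide_prop_true P : decide_prop P = true <-> P.
Proof. unfold decide_prop. destruct (excluded_middle_informative P); intuition discriminate. Qed.

Lemma decide_prop_false P : decide_prop P = false <-> ~ P.
Proof. unfold decide_prop. destruct (excluded_middle_informative P); intuition discriminate. Qed.

Lemma length_filter_seq_shift (f : nat -> bool) s t L :
  length (filter f (seq (s + t) L)) = length (filter (fun i => f (s + i)%nat) (seq t L)).
Proof.
  revert t. induction L as [|L IH]; intro t; [reflexivity|]. simpl.
  replace (S (s + t)) with (s + S t)%nat by lia.
  destruct (f (s + t)%nat); simpl; rewrite IH; reflexivity.
Qed.

Lemma residue_index_exists p d t :
  prime p -> ~ (p | d) -> exists i, (i < Z.to_nat p)%nat /\ (p | d * Z.of_nat i - t).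
Proof.
  intros Hp Hd. assert (p2 := prime_ge_2 p Hp).
  destruct (linear_congruence_solvable p d (- t) Hp Hd) as [v Hv].
  assert (Hm := Z.mod_pos_bound v p ltac:(lia)).
  exists (Z.to_nat (v mod p)). split; [lia|]. rewrite Z2Nat.id by lia.
  replace (d * (v mod p) - t) with ((- t + v * d) - d * (p * (v / p)))
    by (rewrite (Z.mod_eq v p) by lia; ring).
  apply Z.divide_sub_r; [exact Hv | apply Z.divide_mul_r, Z.divide_factor_l].
Qed.

Lemma residue_index_unique p d i j :
  prime p -> ~ (p | d) -> (i < Z.to_nat p)%nat -> (j < Z.to_nat p)%nat ->
  (p | d * Z.of_nat i - d * Z.of_nat j) -> i = j.
Proof.
  intros Hp Hd Hi Hj H.
  replace (d * Z.of_nat i - d * Z.of_nat j) with (d * (Z.of_nat i - Z.of_nat j)) in H by ring.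
  destruct (prime_mult p Hp _ _ H) as [H1|H1]; [contradiction|].
  apply divide_small_eq0 in H1; lia.
Qed.

(* Bounds the number of exceptional values of parity e among p^s consecutive terms
   of a progression; exceptional_bound p false s is psi_p(p^(s+1)). *)
Fixpoint exceptional_bound (p : Z) (e : bool) (s : nat) : Z :=
  match s with
  | O => 1
  | S s' => if e then exceptional_bound p false s'
            else p ^ Z.of_nat s' * ((p - 1) / 2) + exceptional_bound p true s'
  end.

Definition digit_sum (p q : Z) (j f : nat) : Z :=
  fold_right Z.add 0 (map (fun i => digit p q i * exceptional_bound p false i) (seq j f)).

Section Counting.
Variables (p w d : Z).
Hypotheses (Hp : prime p) (Hp2 : p <> 2) (Hw : ~ (p | w)) (Hd : ~ (p | d)).

Let p_gt_1 : 1 < p.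
Proof. pose proof (prime_ge_2 p Hp). lia. Qed.

Let p_odd : p = 2 * ((p - 1) / 2) + 1.
Proof. exact (odd_prime_half p Hp Hp2). Qed.

Definition count_exceptional (e : bool) (b : Z) (L : nat) : nat :=
  length (filter (fun i => decide_prop (exceptional p w e (d * Z.of_nat i + b))) (seq 0 L)).

Lemma count_exceptional_add e b L1 L2 :
  count_exceptional e b (L1 + L2)
  = (count_exceptional e b L1 + count_exceptional e (b + d * Z.of_nat L1) L2)%nat.
Proof.
  unfold count_exceptional. rewrite seq_app, filter_app, length_app. f_equal.
  replace (0 + L1)%nat with (L1 + 0)%nat by lia. rewrite length_filter_seq_shift.
  f_equal. apply filter_ext. intro i. rewrite Nat2Z.inj_add. do 2 f_equal. ring.
Qed.

Lemma count_exceptional_le e b L : (count_exceptional e b L <= L)%nat.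
Proof.
  unfold count_exceptional. rewrite <- (length_seq L 0) at 2. apply filter_length_le.
Qed.

Lemma count_exceptional_mono e b L1 L2 :
  (L1 <= L2)%nat -> (count_exceptional e b L1 <= count_exceptional e b L2)%nat.
Proof.
  intros HL. replace L2 with (L1 + (L2 - L1))%nat by lia.
  rewrite count_exceptional_add. lia.
Qed.

(* The values w x^2, 1 <= x <= (p - 1) / 2, give (p - 1) / 2 distinct residues. *)
Lemma square_class_indices b :
  exists l, length l = Z.to_nat ((p - 1) / 2) /\ NoDup l /\
    forall i, In i l -> (i < Z.to_nat p)%nat /\ ~ (p | d * Z.of_nat i + b) /\
                        exists x, (p | w * x ^ 2 - (d * Z.of_nat i + b)).
Proof.
  assert (index : forall t, {i | (i < Z.to_nat p)%nat /\ (p | d * Z.of_nat i - (t - b))}).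
  { intro t. apply constructive_indefinite_description, residue_index_exists; assumption. }
  set (ix := fun t => proj1_sig (index t)).
  assert (ix_lt : forall t, (ix t < Z.to_nat p)%nat) by (intro t; apply (proj2_sig (index t))).
  assert (ix_cong : forall t, (p | (d * Z.of_nat (ix t) + b) - t)).
  { intro t. replace (d * Z.of_nat (ix t) + b - t) with (d * Z.of_nat (ix t) - (t - b)) by ring.
    apply (proj2_sig (index t)). }
  set (xs := map Z.of_nat (seq 1 (Z.to_nat ((p - 1) / 2)))).
  assert (xs_range : forall x, In x xs -> 1 <= x <= (p - 1) / 2).
  { intros x Hx. apply in_map_iff in Hx as [k [<- Hk]]. apply in_seq in Hk. lia. }
  assert (unit_sq : forall x, In x xs -> ~ (p | w * x ^ 2)).
  { intros x Hx. apply prime_not_divide_mul, prime_not_divide_sq; try assumption.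
    intro Hpx. apply xs_range in Hx. apply divide_small_eq0 in Hpx; lia. }
  exists (map (fun x => ix (w * x ^ 2)) xs). split; [|split].
  - unfold xs. rewrite !length_map, length_seq. reflexivity.
  - apply NoDup_map_NoDup_ForallPairs.
    + intros x y Hx Hy E. apply (sq_mod_prime_inj p w); try assumption;
        try (apply xs_range in Hx; lia); try (apply xs_range in Hy; lia).
      replace (w * x ^ 2 - w * y ^ 2) with
        ((d * Z.of_nat (ix (w * y ^ 2)) + b - w * y ^ 2)
         - (d * Z.of_nat (ix (w * x ^ 2)) + b - w * x ^ 2)) by (rewrite E; ring).
      apply Z.divide_sub_r; apply ix_cong.
    + apply NoDup_map_NoDup_ForallPairs; [intros a c _ _ E; lia | apply seq_NoDup].
  - intros i Hi. apply in_map_iff in Hi as [x [<- Hx]].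
    split; [apply ix_lt|]. split.
    + intro Hq. apply (unit_sq x Hx).
      replace (w * x ^ 2) with
        ((d * Z.of_nat (ix (w * x ^ 2)) + b) - (d * Z.of_nat (ix (w * x ^ 2)) + b - w * x ^ 2))
        by ring.
      apply Z.divide_sub_r; [exact Hq | apply ix_cong].
    + exists x.
      replace (w * x ^ 2 - (d * Z.of_nat (ix (w * x ^ 2)) + b))
        with (- (d * Z.of_nat (ix (w * x ^ 2)) + b - w * x ^ 2)) by ring.
      apply Z.divide_opp_r, ix_cong.
Qed.

Lemma multiple_in_block b : exists i0, (i0 < Z.to_nat p)%nat /\ (p | d * Z.of_nat i0 + b).
Proof.
  destruct (residue_index_exists p d (- b) Hp Hd) as [i0 [Hi0 Hdiv]].
  exists i0. rewrite <- Z.sub_opp_r. split; assumption.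
Qed.

Lemma count_exceptional_1 e b :
  count_exceptional e b 1 = if decide_prop (exceptional p w e b) then 1%nat else 0%nat.
Proof.
  unfold count_exceptional. simpl. rewrite Z.mul_0_r, Z.add_0_l.
  destruct (decide_prop _); reflexivity.
Qed.

Lemma exceptional_multiple e t :
  (p | t) -> exceptional p w e t <-> exceptional p w (negb e) (t / p).
Proof.
  intros [q ->]. rewrite Z.div_mul, Z.mul_comm by lia. apply exceptional_mul_p, Hp.
Qed.

Section Block.
Variables (b : Z) (i0 : nat).
Hypotheses (Hi0 : (i0 < Z.to_nat p)%nat) (Hdiv : (p | d * Z.of_nat i0 + b)).

Let units_off_i0 i : (i < Z.to_nat p)%nat -> i <> i0 -> ~ (p | d * Z.of_nat i + b).
Proof.
  intros Hi Hne Hpi. apply Hne, (residue_index_unique p d i i0 Hp Hd Hi Hi0).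
  replace (d * Z.of_nat i - d * Z.of_nat i0)
    with ((d * Z.of_nat i + b) - (d * Z.of_nat i0 + b)) by ring.
  apply Z.divide_sub_r; assumption.
Qed.

(* A unit is never exceptional of odd parity, so only the multiple of p counts. *)
Lemma count_block_odd :
  (count_exceptional true b (Z.to_nat p)
   <= count_exceptional false ((d * Z.of_nat i0 + b) / p) 1)%nat.
Proof.
  rewrite count_exceptional_1.
  set (f := fun i => decide_prop (exceptional p w true (d * Z.of_nat i + b))).
  set (target := if decide_prop (exceptional p w false ((d * Z.of_nat i0 + b) / p))
                 then [i0] else []).
  assert (I : incl (filter f (seq 0 (Z.to_nat p))) target).
  { intros i Hi. apply filter_In in Hi as [Hi Hf]. apply in_seq in Hi.
    unfold f in Hf. rewrite decide_prop_true in Hf. destruct (Nat.eq_dec i i0) as [->|Hne].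
    - rewrite (exceptional_multiple true _ Hdiv), <- decide_prop_true in Hf.
      unfold target. simpl negb in Hf. rewrite Hf. left. reflexivity.
    - apply exceptional_unit in Hf as [Hf _]; [discriminate | apply units_off_i0; lia]. }
  assert (Le := NoDup_incl_length (NoDup_filter f (seq_NoDup _ 0)) I).
  unfold count_exceptional. fold f. unfold target in Le.
  destruct (decide_prop _); simpl in Le |- *; lia.
Qed.

(* The units of the form w x^2 are never exceptional. *)
Lemma count_block_even :
  (count_exceptional false b (Z.to_nat p)
   <= Z.to_nat ((p - 1) / 2) + count_exceptional true ((d * Z.of_nat i0 + b) / p) 1)%nat.
Proof.
  rewrite count_exceptional_1.
  set (f := fun i => decide_prop (exceptional p w false (d * Z.of_nat i + b))).
  destruct (square_class_indices b) as [l [Hlen [Hnd Hl]]].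
  set (head := if decide_prop (exceptional p w true ((d * Z.of_nat i0 + b) / p))
               then [] else [i0]).
  assert (I : incl (head ++ l) (filter (fun i => negb (f i)) (seq 0 (Z.to_nat p)))).
  { intros i Hi. apply filter_In. apply in_app_or in Hi as [Hi|Hi].
    - unfold head in Hi. destruct (decide_prop _) eqn:E; [destruct Hi|].
      destruct Hi as [<-|[]]. split; [apply in_seq; lia|].
      apply Bool.negb_true_iff, decide_prop_false.
      rewrite (exceptional_multiple false _ Hdiv). apply decide_prop_false, E.
    - destruct (Hl i Hi) as [Hlt [Hunit [x Hx]]]. split; [apply in_seq; lia|].
      apply Bool.negb_true_iff, decide_prop_false.
      rewrite exceptional_unit by exact Hunit. intros [_ Hn]. apply Hn. exists x. exact Hx. }
  assert (ND : NoDup (head ++ l)).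
  { apply NoDup_app; [unfold head; destruct (decide_prop _); repeat constructor; easy
                     | exact Hnd |].
    intros i Hi Hil. unfold head in Hi. destruct (decide_prop _); [destruct Hi|].
    destruct Hi as [<-|[]]. destruct (Hl i0 Hil) as [_ [Hunit _]]. contradiction. }
  assert (Le := NoDup_incl_length ND I).
  assert (FL := filter_length f (seq 0 (Z.to_nat p))).
  rewrite length_seq in FL. rewrite length_app, Hlen in Le.
  assert (HP : Z.to_nat p = (2 * Z.to_nat ((p - 1) / 2) + 1)%nat) by lia.
  unfold count_exceptional. fold f. unfold head in Le.
  destruct (decide_prop _); simpl in Le |- *; lia.
Qed.

End Block.

Lemma count_block e b i0 :
  (i0 < Z.to_nat p)%nat -> (p | d * Z.of_nat i0 + b) ->
  (count_exceptional e b (Z.to_nat p)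
   <= (if e then 0 else Z.to_nat ((p - 1) / 2))
      + count_exceptional (negb e) ((d * Z.of_nat i0 + b) / p) 1)%nat.
Proof.
  intros Hi0 Hdiv. destruct e; [apply count_block_odd | apply count_block_even]; assumption.
Qed.

Lemma count_blocks e L : forall b i0,
  (i0 < Z.to_nat p)%nat -> (p | d * Z.of_nat i0 + b) ->
  (count_exceptional e b (Z.to_nat p * L)
   <= (if e then 0 else L * Z.to_nat ((p - 1) / 2))
      + count_exceptional (negb e) ((d * Z.of_nat i0 + b) / p) L)%nat.
Proof.
  induction L as [|L IH]; intros b i0 Hi0 Hdiv.
  { rewrite Nat.mul_0_r. unfold count_exceptional. simpl. lia. }
  replace (Z.to_nat p * S L)%nat with (Z.to_nat p + Z.to_nat p * L)%nat by lia.
  replace (S L) with (1 + L)%nat by lia.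
  rewrite !count_exceptional_add, Z2Nat.id by lia.
  assert (Hnext : d * Z.of_nat i0 + (b + d * p) = (d * Z.of_nat i0 + b) + d * p) by ring.
  assert (Hdiv' : (p | d * Z.of_nat i0 + (b + d * p))).
  { rewrite Hnext. apply Z.divide_add_r; [exact Hdiv | apply Z.divide_factor_r]. }
  assert (B1 := count_block e b i0 Hi0 Hdiv).
  assert (B2 := IH _ i0 Hi0 Hdiv').
  rewrite Hnext, Z_div_plus_full in B2 by lia.
  replace (d * Z.of_nat 1) with d by lia. destruct e; simpl in *; lia.
Qed.

Lemma count_pow_le s : forall e b,
  Z.of_nat (count_exceptional e b (Z.to_nat p ^ s)) <= exceptional_bound p e s.
Proof.
  induction s as [|s IH]; intros e b.
  { assert (H := count_exceptional_le e b 1). simpl. lia. }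
  destruct (multiple_in_block b) as [i0 [Hi0 Hdiv]]. rewrite Nat.pow_succ_r'.
  assert (B := count_blocks e (Z.to_nat p ^ s) b i0 Hi0 Hdiv).
  assert (I := IH (negb e) ((d * Z.of_nat i0 + b) / p)).
  assert (E : Z.of_nat (Z.to_nat p ^ s * Z.to_nat ((p - 1) / 2))
              = p ^ Z.of_nat s * ((p - 1) / 2))
    by (rewrite Nat2Z.inj_mul, Nat2Z.inj_pow, !Z2Nat.id; lia).
  destruct e; simpl; simpl negb in B, I; lia.
Qed.

Lemma count_mul_pow_le c s e b :
  Z.of_nat (count_exceptional e b (c * Z.to_nat p ^ s)) <= Z.of_nat c * exceptional_bound p e s.
Proof.
  revert b. induction c as [|c IH]; intro b; [simpl; lia|].
  rewrite Nat.mul_succ_l, Nat.add_comm, count_exceptional_add, Nat2Z.inj_add.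
  assert (A := count_pow_le s e b).
  assert (B := IH (b + d * Z.of_nat (Z.to_nat p ^ s))). lia.
Qed.

Lemma digit_nonneg q i : 0 <= digit p q i.
Proof. apply Z.mod_pos_bound. lia. Qed.

(* Expand q / p^j in base p, lowest digit first. *)
Lemma count_le_digit_sum q f : 0 <= q -> forall j b, q < p ^ Z.of_nat (j + f) ->
  Z.of_nat (count_exceptional false b (Z.to_nat (q / p ^ Z.of_nat j) * Z.to_nat p ^ j))
  <= digit_sum p q j f.
Proof.
  intros Hq. induction f as [|f IH]; intros j b Hlt.
  { rewrite Nat.add_0_r in Hlt. rewrite Z.div_small by lia.
    unfold count_exceptional, digit_sum. simpl. lia. }
  assert (Hpj : 0 < p ^ Z.of_nat j) by (apply Z.pow_pos_nonneg; lia).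
  assert (E1 : q / p ^ Z.of_nat j = p * (q / p ^ Z.of_nat (S j)) + digit p q j).
  { unfold digit. rewrite (Z.div_mod (q / p ^ Z.of_nat j) p) at 1 by lia.
    rewrite Z.div_div, Nat2Z.inj_succ, Z.pow_succ_r, (Z.mul_comm (p ^ Z.of_nat j) p) by lia.
    reflexivity. }
  assert (Hd0 := digit_nonneg q j).
  assert (Hq1 : 0 <= q / p ^ Z.of_nat (S j))
    by (apply Z.div_pos; [lia | apply Z.pow_pos_nonneg; lia]).
  assert (E2 : (Z.to_nat (q / p ^ Z.of_nat j) * Z.to_nat p ^ j
                = Z.to_nat (digit p q j) * Z.to_nat p ^ j
                  + Z.to_nat (q / p ^ Z.of_nat (S j)) * Z.to_nat p ^ S j)%nat).
  { apply Nat2Z.inj. rewrite !Nat2Z.inj_add, !Nat2Z.inj_mul, !Nat2Z.inj_pow, !Z2Nat.id by lia.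
    rewrite E1, Nat2Z.inj_succ, Z.pow_succ_r by lia. ring. }
  rewrite E2, count_exceptional_add, Nat2Z.inj_add.
  assert (A := count_mul_pow_le (Z.to_nat (digit p q j)) j false b).
  rewrite Z2Nat.id in A by lia.
  assert (B := IH (S j) (b + d * Z.of_nat (Z.to_nat (digit p q j) * Z.to_nat p ^ j))
                  ltac:(replace (S j + f)%nat with (j + S f)%nat by lia; exact Hlt)).
  change (digit_sum p q j (S f)) with (digit p q j * exceptional_bound p false j
                                        + digit_sum p q (S j) f).
  lia.
Qed.

Lemma count_le_one b r : (r <= Z.to_nat p)%nat -> (count_exceptional true b r <= 1)%nat.
Proof.
  intros Hr. destruct (multiple_in_block b) as [i0 [Hi0 Hdiv]].
  assert (M := count_exceptional_mono true b r (Z.to_nat p) Hr).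
  assert (B := count_block_odd b i0 Hi0 Hdiv).
  assert (C := count_exceptional_le false ((d * Z.of_nat i0 + b) / p) 1). lia.
Qed.

Lemma count_le_first_digit_and_digit_sum b n : 0 <= n ->
  Z.of_nat (count_exceptional true b (Z.to_nat n))
  <= (if n mod p =? 0 then 0 else 1) + digit_sum p (n / p) 0 (Z.to_nat n).
Proof.
  intros Hn. assert (Hm := Z.mod_pos_bound n p ltac:(lia)).
  assert (Hq : 0 <= n / p) by (apply Z.div_pos; lia).
  assert (E : Z.to_nat n = (Z.to_nat p * Z.to_nat (n / p) + Z.to_nat (n mod p))%nat).
  { apply Nat2Z.inj. rewrite Nat2Z.inj_add, Nat2Z.inj_mul, !Z2Nat.id by lia.
    apply Z.div_mod. lia. }
  rewrite E at 1. rewrite count_exceptional_add, Nat2Z.inj_add.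
  destruct (multiple_in_block b) as [i0 [Hi0 Hdiv]].
  assert (B := count_blocks true (Z.to_nat (n / p)) b i0 Hi0 Hdiv). simpl in B.
  assert (D := count_le_digit_sum (n / p) (Z.to_nat n) Hq 0 ((d * Z.of_nat i0 + b) / p)).
  rewrite Z.pow_0_r, Z.div_1_r, Nat.pow_0_r, Nat.mul_1_r in D.
  assert (Hlt : n / p < p ^ Z.of_nat (0 + Z.to_nat n)).
  { rewrite Nat.add_0_l, Z2Nat.id by lia. apply Z.le_lt_trans with n.
    - apply Z.div_le_upper_bound; nia.
    - apply Z.pow_gt_lin_r; lia. }
  specialize (D Hlt).
  set (b' := b + d * Z.of_nat (Z.to_nat p * Z.to_nat (n / p))).
  destruct (n mod p =? 0) eqn:Em.
  - apply Z.eqb_eq in Em. rewrite Em. simpl (Z.to_nat 0).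
    unfold count_exceptional at 2. simpl. lia.
  - assert (S := count_le_one b' (Z.to_nat (n mod p)) ltac:(lia)). lia.
Qed.

End Counting.

Lemma exceptional_bound_psi_pow p s :
  prime p -> p <> 2 -> IZR (exceptional_bound p false s) = psi_pow p (S s).
Proof.
  intros Hp H2. assert (p2 := prime_ge_2 p Hp). assert (Ho := odd_prime_half p Hp H2).
  set (h := (p - 1) / 2) in *.
  assert (Hh : IZR p = (2 * IZR h + 1)%R)
    by (rewrite Ho at 1; rewrite plus_IZR, mult_IZR; reflexivity).
  assert (Hden : (2 * IZR p + 2 <> 0)%R) by (apply IZR_le in p2; lra).
  enough (Two : IZR (exceptional_bound p false s) = psi_pow p (S s) /\
                IZR (exceptional_bound p false (S s)) = psi_pow p (S (S s))) by apply Two.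
  induction s as [|s [IH1 IH2]].
  - split; [unfold psi_pow; simpl; field; lra|].
    change (exceptional_bound p false 1) with (p ^ Z.of_nat 0 * h + 1).
    rewrite plus_IZR, mult_IZR, <- pow_IZR. unfold psi_pow. change (Nat.odd 2) with false. cbv iota.
    rewrite Hh. field. rewrite <- Hh. exact Hden.
  - split; [exact IH2|].
    change (exceptional_bound p false (S (S s)))
      with (p ^ Z.of_nat (S s) * h + exceptional_bound p false s).
    rewrite plus_IZR, mult_IZR, IH1, <- pow_IZR.
    unfold psi_pow. change (Nat.odd (S (S (S s)))) with (Nat.odd (S s)).
    replace (IZR p ^ S (S (S s)))%R with (IZR p ^ S s * (IZR p * IZR p))%R by (simpl; ring).
    destruct (Nat.odd (S s)); field_simplify_eq; auto; rewrite Hh; ring.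
Qed.

Lemma digit_S p n i : 1 < p -> digit p n (S i) = digit p (n / p) i.
Proof.
  intros Hp. unfold digit.
  rewrite Z.div_div, Nat2Z.inj_succ, Z.pow_succ_r by (try apply Z.pow_pos_nonneg; lia).
  reflexivity.
Qed.

Lemma digit_sum_psi p n : prime p -> p <> 2 -> forall f j,
  IZR (digit_sum p (n / p) j f)
  = fold_right Rplus 0%R (map (fun i => (IZR (digit p n i) * psi_pow p i)%R) (seq (S j) f)).
Proof.
  intros Hp H2. assert (p2 := prime_ge_2 p Hp).
  induction f as [|f IH]; intro j; [reflexivity|].
  change (digit_sum p (n / p) j (S f))
    with (digit p (n / p) j * exceptional_bound p false j + digit_sum p (n / p) (S j) f).
  rewrite plus_IZR, mult_IZR, IH, exceptional_bound_psi_pow, <- digit_S by (auto; lia).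
  reflexivity.
Qed.

Lemma count_exceptional_le_psi p w d b n :
  prime p -> p <> 2 -> ~ (p | w) -> ~ (p | d) -> 0 <= n ->
  (INR (length (filter (fun u => decide_prop (exceptional p w true (d * u + b))) (zrange n)))
   <= psi p n)%R.
Proof.
  intros Hp H2 Hw Hd Hn.
  assert (C := count_le_first_digit_and_digit_sum p w d Hp H2 Hw Hd b n Hn).
  apply IZR_le in C. rewrite <- INR_IZR_INZ in C.
  unfold zrange. rewrite filter_map_swap, length_map. eapply Rle_trans; [exact C|].
  unfold psi. rewrite plus_IZR, digit_sum_psi by assumption.
  replace (digit p n 0) with (n mod p) by (unfold digit; simpl; rewrite Z.div_1_r; reflexivity).
  destruct (n mod p =? 0); simpl; lra.
Qed.

Lemma psi_nonneg p n : 5 <= p -> (0 <= psi p n)%R.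
Proof.
  intros H5. assert (P5 : (5 <= IZR p)%R) by (apply IZR_le; lia).
  unfold psi. apply Rplus_le_le_0_compat; [destruct (Z.eqb _ _); lra|].
  induction (seq 1 (Z.to_nat n)) as [|i l IH]; simpl; [lra|].
  apply Rplus_le_le_0_compat; [|exact IH].
  apply Rmult_le_pos; [apply IZR_le, Z.mod_pos_bound; lia|].
  assert (P0 : (0 <= IZR p ^ i)%R) by (apply pow_le; lra).
  unfold psi_pow. destruct (Nat.odd i); apply Rle_mult_inv_pos; lra.
Qed.

(** * Sieving over the anisotropic primes *)

Lemma sieve (Ps : list Z) (good : Z -> Z -> Prop) (bound : Z -> R) n : 0 <= n ->
  (forall p, In p Ps -> exists bad : Z -> Prop,
     (forall u, 0 <= u -> ~ bad u -> good p u) /\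
     (INR (length (filter (fun u => decide_prop (bad u)) (zrange n))) <= bound p)%R) ->
  exists L, NoDup L /\ (forall u, In u L -> 0 <= u < n /\ forall p, In p Ps -> good p u) /\
    (IZR n - fold_right Rplus 0 (map bound Ps) <= INR (length L))%R.
Proof.
  intros Hn. induction Ps as [|p Ps IH]; intros Hbad.
  - exists (zrange n). split; [apply NoDup_zrange|]. split.
    + intros u Hu. split; [apply in_zrange, Hu | intros q []].
    + simpl. rewrite length_zrange, INR_IZR_INZ, Z2Nat.id by lia. lra.
  - destruct IH as [L [ND [HL Hlen]]]; [intros q Hq; apply Hbad; right; exact Hq|].
    destruct (Hbad p (or_introl eq_refl)) as [bad [Hgood Hcount]].
    set (f := fun u => decide_prop (bad u)).
    exists (filter (fun u => negb (f u)) L). split; [|split].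
    + apply NoDup_filter, ND.
    + intros u Hu. apply filter_In in Hu as [Hu Hf]. destruct (HL u Hu) as [Hun Hgoods].
      split; [exact Hun|]. intros q [<-|Hq]; [|apply Hgoods, Hq].
      apply Hgood; [lia|]. apply Bool.negb_true_iff, decide_prop_false in Hf. exact Hf.
    + assert (FL := filter_length f L).
      assert (I : incl (filter f L) (filter f (zrange n))).
      { intros u Hu. apply filter_In in Hu as [Hu Hf].
        apply filter_In. split; [apply in_zrange, HL, Hu | exact Hf]. }
      assert (Le := NoDup_incl_length (NoDup_filter _ ND) I).
      apply le_INR in Le. apply (f_equal INR) in FL. rewrite plus_INR in FL.
      fold f in Hcount. simpl. lra.
Qed.

Fixpoint factZ (k : nat) : Z := match k with O => 1 | S k' => Z.of_nat (S k') * factZ k' end.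

Lemma factZ_pos k : 0 < factZ k.
Proof. induction k; cbn [factZ]; [lia | apply Z.mul_pos_pos; lia]. Qed.

Lemma divide_factZ i k : (1 <= i <= k)%nat -> (Z.of_nat i | factZ k).
Proof.
  induction k as [|k IH]; intros H; [lia|]. cbn [factZ].
  destruct (Nat.eq_dec i (S k)) as [->|Ne];
    [apply Z.divide_factor_l | apply Z.divide_mul_r, IH; lia].
Qed.

Lemma prime_divisor_exists n : 1 < n -> exists q, prime q /\ (q | n).
Proof.
  remember (Z.to_nat n) as k eqn:Hk. revert n Hk.
  induction k as [k IH] using lt_wf_ind. intros n Hk Hn.
  destruct (prime_dec n) as [P|P]; [exists n; split; [exact P | apply Z.divide_refl]|].
  destruct (not_prime_divide n Hn P) as [m [Hm Hmn]].
  destruct (IH (Z.to_nat m) ltac:(lia) m eq_refl ltac:(lia)) as [q [Hq Hqm]].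
  exists q. split; [exact Hq | apply Z.divide_trans with m; assumption].
Qed.

(* Euclid: a prime factor of M! + 1 exceeds M. *)
Lemma exists_prime_gt M : exists q, prime q /\ M < q.
Proof.
  assert (F := factZ_pos (Z.to_nat M)).
  destruct (prime_divisor_exists (factZ (Z.to_nat M) + 1) ltac:(lia)) as [q [Hq Hd]].
  exists q. split; [exact Hq|]. assert (q2 := prime_ge_2 q Hq).
  destruct (Z_lt_le_dec M q) as [|Hle]; [assumption|]. exfalso.
  assert (D : (q | factZ (Z.to_nat M))).
  { replace q with (Z.of_nat (Z.to_nat q)) by lia. apply divide_factZ. lia. }
  assert (D1 : (q | 1)).
  { replace 1 with (factZ (Z.to_nat M) + 1 - factZ (Z.to_nat M)) by ring.
    apply Z.divide_sub_r; assumption. }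
  apply Z.divide_pos_le in D1; lia.
Qed.

Lemma le_fold_max (l : list Z) x : In x l \/ x = 5 -> x <= fold_right Z.max 5 l.
Proof.
  induction l as [|a l IH]; simpl; intros Hx.
  - destruct Hx as [[]| ->]. lia.
  - destruct Hx as [[->|Hx]| ->];
      [lia | specialize (IH (or_introl Hx)) | specialize (IH (or_intror eq_refl))]; lia.
Qed.

Lemma extend_by_large_primes k : forall l : list Z, NoDup l ->
  exists ex, length ex = k /\ NoDup (l ++ ex) /\ forall p, In p ex -> prime p /\ 5 <= p.
Proof.
  induction k as [|k IH]; intros l Hl.
  { exists []. rewrite app_nil_r. split; [reflexivity | split; [exact Hl | intros r []]]. }
  destruct (exists_prime_gt (fold_right Z.max 5 l)) as [q [Hq Hql]].
  assert (Hnew : ~ In q l) by (intro H; pose proof (le_fold_max l q (or_introl H)); lia).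
  assert (H5 := le_fold_max l 5 (or_intror eq_refl)).
  destruct (IH (l ++ [q])) as [ex [Hlen [Hnd Hex]]].
  { apply NoDup_app; [exact Hl | repeat constructor; intros [] | intros a Ha [<-|[]]; auto]. }
  exists (q :: ex). rewrite <- app_assoc in Hnd. split; [simpl; lia|]. split; [exact Hnd|].
  intros r [<-|Hr]; [split; [exact Hq | lia] | apply Hex, Hr].
Qed.

Lemma fold_right_Rplus_app (l1 l2 : list R) :
  (fold_right Rplus 0 (l1 ++ l2) = fold_right Rplus 0 l1 + fold_right Rplus 0 l2)%R.
Proof. induction l1 as [|x l1 IH]; simpl; [ring | rewrite IH; ring]. Qed.

Lemma sum_psi_nonneg n (l : list Z) :
  (forall p, In p l -> 5 <= p) -> (0 <= fold_right Rplus 0 (map (fun p => psi p n) l))%R.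
Proof.
  induction l as [|p l IH]; simpl; intros H5; [lra|].
  apply Rplus_le_le_0_compat; [apply psi_nonneg, H5 | apply IH]; auto.
Qed.

(* Enlarge T by arbitrary primes >= 5 to an admissible set of size s; psi >= 0. *)
Lemma is_eta_le n s e (Tl : list Z) :
  is_eta n s e -> NoDup Tl -> (forall p, In p Tl -> prime p /\ 5 <= p) -> (length Tl <= s)%nat ->
  (e <= IZR n - fold_right Rplus 0 (map (fun p => psi p n) Tl))%R.
Proof.
  intros [_ Hmin] Hnd HTl Hlen.
  destruct (extend_by_large_primes (s - length Tl) Tl Hnd) as [ex [Hex [Hnd' Hprimes]]].
  assert (Adm : admissible s (Tl ++ ex)).
  { split; [exact Hnd'|]. split; [rewrite length_app; lia|].
    intros p Hp. apply in_app_or in Hp as [Hp|Hp]; [apply HTl | apply Hprimes]; exact Hp. }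
  specialize (Hmin _ Adm). unfold eta_value in Hmin.
  rewrite map_app, fold_right_Rplus_app in Hmin.
  pose proof (sum_psi_nonneg n ex (fun p Hp => proj2 (Hprimes p Hp))). lra.
Qed.

(** * Local and global representation of the progression *)

Lemma stable_odd_of_pstable p a1 a2 a3 : p <> 2 -> pstable p a1 a2 a3 -> stable_odd p a1 a2 a3.
Proof. intros H2. unfold pstable. rewrite (proj2 (Z.eqb_neq p 2) H2). auto. Qed.

Lemma rep_Zp_odd_prime_dichotomy p c a1 a2 a3 al1 al2 al3 :
  prime p -> p <> 2 -> Z.gcd (Z.gcd a1 a2) a3 = 1 -> Z.gcd c (al1 * al2 * al3) = 1 ->
  (~ (p | c) -> pstable p a1 a2 a3) ->
  (forall D, rep_Zp (CQP c a1 a2 a3 al1 al2 al3) p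
               (a1 * al1 ^ 2 + a2 * al2 ^ 2 + a3 * al3 ^ 2 + c * D)) \/
  (~ (p | c) /\ anisotropic p a1 a2 a3 /\
   exists w, ~ (p | w) /\
     forall N, ~ exceptional p w true N -> rep_Zp (CQP c a1 a2 a3 al1 al2 al3) p N).
Proof.
  intros Hp H2 Hga Hgc Hst. destruct (classic (p | c)) as [Hc|Hc].
  - left. intro D. apply rep_Zp_of_divide_c; try assumption.
    + destruct (classic (p | a1)) as [D1|D1]; [|left; exact D1].
      destruct (classic (p | a2)) as [D2|D2]; [|right; left; exact D2].
      right; right. apply (prime_not_divide_coprime p (Z.gcd a1 a2)); try assumption.
      apply Z.gcd_greatest; assumption.
    + intro Hd. apply (prime_not_divide_coprime p c _ Hp Hgc Hc).
      do 2 apply Z.divide_mul_l. exact Hd.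
    + intro Hd. apply (prime_not_divide_coprime p c _ Hp Hgc Hc).
      apply Z.divide_mul_l, Z.divide_mul_r. exact Hd.
    + intro Hd. apply (prime_not_divide_coprime p c _ Hp Hgc Hc).
      apply Z.divide_mul_r. exact Hd.
  - destruct (stable_odd_cases p c a1 a2 a3 al1 al2 al3 Hp H2 Hc
                (stable_odd_of_pstable p a1 a2 a3 H2 (Hst Hc))) as [Hall|Hexc].
    + left. intro D. apply Hall.
    + right. split; [exact Hc | exact Hexc].
Qed.

Lemma prime_cases q : prime q -> q = 2 \/ q = 3 \/ 5 <= q.
Proof.
  intros Hq. assert (q2 := prime_ge_2 q Hq).
  destruct (Z.eq_dec q 4) as [->|]; [|lia].
  exfalso. destruct (prime_divisors 4 Hq 2 ltac:(exists 2; reflexivity)) as [?|[?|[?|?]]]; lia.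
Qed.

Lemma delta_m_cases m : delta_m m = 1 \/ delta_m m = 2 \/ delta_m m = 4.
Proof. unfold delta_m. destruct (Z.odd m); [auto|]. destruct (_ =? 2); auto. Qed.

Lemma rep_R_of_nonneg c a1 a2 a3 al1 al2 al3 N :
  0 < c -> 0 < a1 -> 0 <= N -> rep_R (CQP c a1 a2 a3 al1 al2 al3) N.
Proof.
  intros Hc Ha HN. apply IZR_lt in Hc, Ha. apply IZR_le in HN.
  exists ((sqrt (IZR N / IZR a1) - IZR al1) / IZR c)%R, (- IZR al2 / IZR c)%R,
    (- IZR al3 / IZR c)%R.
  unfold gR; cbn [qa1 qa2 qa3 qc qal1 qal2 qal3].
  replace (IZR c * ((sqrt (IZR N / IZR a1) - IZR al1) / IZR c) + IZR al1)%R
    with (sqrt (IZR N / IZR a1)) by (field; lra).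
  replace (IZR c * (- IZR al2 / IZR c) + IZR al2)%R with 0%R by (field; lra).
  replace (IZR c * (- IZR al3 / IZR c) + IZR al3)%R with 0%R by (field; lra).
  rewrite <- Rsqr_pow2, Rsqr_sqrt; [field; lra | apply Rle_mult_inv_pos; lra].
Qed.

Lemma rep_Z_of_tight_regular g N :
  tight_regular g -> gZ g 0 0 0 <= N -> (forall p, prime p -> rep_Zp g p N) -> rep_R g N ->
  rep_Z g N.
Proof.
  intros [gmin [_ [Hmin Htr]]] HN. apply Htr. specialize (Hmin 0 0 0). lia.
Qed.

Section Progression.

Variables (m a1 a2 a3 al1 al2 al3 kappa nu : Z).
Hypotheses (Hga : Z.gcd (Z.gcd a1 a2) a3 = 1) (Hgc : Z.gcd (c_m m) (al1 * al2 * al3) = 1)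
  (Hstable : forall p, prime p -> ~ (p | c_m m) -> pstable p a1 a2 a3).

Local Notation g := (CQP (c_m m) a1 a2 a3 al1 al2 al3).
Local Notation beta u :=
  (delta_m m * c_m m * (kappa * u + nu) + a1 * al1 ^ 2 + a2 * al2 ^ 2 + a3 * al3 ^ 2).

Lemma beta_eq u : beta u = a1 * al1 ^ 2 + a2 * al2 ^ 2 + a3 * al3 ^ 2
                           + c_m m * (delta_m m * (kappa * u + nu)).
Proof. ring. Qed.

Lemma beta_rep_Zp_of_isotropic q u :
  prime q -> 5 <= q -> ~ anisotropic q a1 a2 a3 -> rep_Zp g q (beta u).
Proof.
  intros Hq H5 Haniso. rewrite beta_eq.
  destruct (rep_Zp_odd_prime_dichotomy q (c_m m) a1 a2 a3 al1 al2 al3 Hq ltac:(lia) Hga Hgc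
              (Hstable q Hq)) as [Hall|[_ [Haniso' _]]];
    [apply Hall | contradiction].
Qed.

Lemma beta_rep_Zp_except_at_most_psi p n :
  prime p -> 5 <= p -> Z.gcd kappa p = 1 -> 0 <= n ->
  exists bad : Z -> Prop, (forall u, 0 <= u -> ~ bad u -> rep_Zp g p (beta u)) /\
    (INR (length (filter (fun u => decide_prop (bad u)) (zrange n))) <= psi p n)%R.
Proof.
  intros Hp H5 Hkp Hn.
  destruct (rep_Zp_odd_prime_dichotomy p (c_m m) a1 a2 a3 al1 al2 al3 Hp ltac:(lia) Hga Hgc
              (Hstable p Hp)) as [Hall|[Hc [_ [w [Hw Hrep]]]]].
  - exists (fun _ => False). split; [intros u _ _; rewrite beta_eq; apply Hall|].
    rewrite (filter_ext _ (fun _ => false)), filter_false by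
      (intro; apply decide_prop_false; tauto).
    apply psi_nonneg. lia.
  - set (b := delta_m m * c_m m * nu + (a1 * al1 ^ 2 + a2 * al2 ^ 2 + a3 * al3 ^ 2)).
    exists (fun u => exceptional p w true (delta_m m * c_m m * kappa * u + b)).
    split.
    + intros u _ Hexc. apply Hrep. replace (beta u) with (delta_m m * c_m m * kappa * u + b)
        by (unfold b; ring). exact Hexc.
    + apply count_exceptional_le_psi; try assumption; [lia|].
      assert (Hdelta : ~ (p | delta_m m)).
      { intro Hd. apply Z.divide_pos_le in Hd; destruct (delta_m_cases m); lia. }
      assert (Hkappa : ~ (p | kappa)).
      { intro Hk. apply (prime_not_divide_coprime p kappa p Hp Hkp Hk), Z.divide_refl. }
      repeat apply prime_not_divide_mul; assumption.
Qed.

Lemma beta_sieve (Tl : list Z) n :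
  0 <= n -> (forall p, In p Tl -> prime p /\ 5 <= p) -> (forall p, In p Tl -> Z.gcd kappa p = 1) ->
  exists L, NoDup L /\
    (forall u, In u L -> 0 <= u < n /\ forall p, In p Tl -> rep_Zp g p (beta u)) /\
    (IZR n - fold_right Rplus 0 (map (fun p => psi p n) Tl) <= INR (length L))%R.
Proof.
  intros Hn HTl Hkp. apply sieve; [exact Hn|]. intros p Hp.
  destruct (HTl p Hp) as [Hpp H5]. apply beta_rep_Zp_except_at_most_psi; auto.
Qed.

Lemma beta_rep_Z u :
  tight_regular g -> 0 < c_m m -> 0 < a1 -> 0 <= a2 -> 0 <= a3 -> 0 < kappa -> 0 <= nu ->
  0 <= u -> (forall q, prime q -> rep_Zp g q (beta u)) -> rep_Z g (beta u).
Proof.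
  intros Htr Hc Ha1 Ha2 Ha3 Hk Hnu Hu Hloc.
  assert (Hdelta : 0 < delta_m m) by (destruct (delta_m_cases m); lia).
  assert (0 <= delta_m m * c_m m * (kappa * u + nu))
    by (apply Z.mul_nonneg_nonneg; nia).
  assert (0 <= a1 * al1 ^ 2 + a2 * al2 ^ 2 + a3 * al3 ^ 2) by nia.
  apply rep_Z_of_tight_regular; [exact Htr | | exact Hloc | apply rep_R_of_nonneg; lia].
  unfold gZ; cbn [qa1 qa2 qa3 qc qal1 qal2 qal3]. lia.
Qed.

End Progression.

Theorem lemma3p5
  (m a1 a2 a3 al1 al2 al3 kappa nu : Z) (Tl : list Z) (s : nat) (n : Z) :
  4 <= m ->
  0 < a1 -> a1 <= a2 -> a2 <= a3 ->
  Z.gcd (Z.gcd a1 a2) a3 = 1 ->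
  0 < al1 -> 2 * al1 < c_m m ->
  0 < al2 -> 2 * al2 < c_m m ->
  0 < al3 -> 2 * al3 < c_m m ->
  Z.gcd (c_m m) (al1 * al2 * al3) = 1 ->
  tight_regular (CQP (c_m m) a1 a2 a3 al1 al2 al3) ->
  (forall p, prime p -> ~ (p | c_m m) -> pstable p a1 a2 a3) ->
  (* Tl enumerates T = { primes p >= 5 : J (x) Z_p anisotropic }, t = length Tl *)
  NoDup Tl ->
  (forall p, In p Tl <-> (prime p /\ 5 <= p /\ anisotropic p a1 a2 a3)) ->
  0 < kappa ->
  (forall p, In p Tl -> Z.gcd kappa p = 1) ->
  0 <= nu ->
  (forall u, 0 <= u ->
     rep_Zp (CQP (c_m m) a1 a2 a3 al1 al2 al3) 2
       (delta_m m * c_m m * (kappa * u + nu) + a1 * al1 ^ 2 + a2 * al2 ^ 2 + a3 * al3 ^ 2) /\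
     rep_Zp (CQP (c_m m) a1 a2 a3 al1 al2 al3) 3
       (delta_m m * c_m m * (kappa * u + nu) + a1 * al1 ^ 2 + a2 * al2 ^ 2 + a3 * al3 ^ 2)) ->
  (1 <= s)%nat -> (length Tl <= s)%nat ->
  0 < n ->
  forall e : R, is_eta n s e ->
  exists L : list Z,
    NoDup L /\
    (forall u, In u L ->
       0 <= u <= n - 1 /\
       rep_Z (CQP (c_m m) a1 a2 a3 al1 al2 al3)
         (delta_m m * c_m m * (kappa * u + nu) + a1 * al1 ^ 2 + a2 * al2 ^ 2 + a3 * al3 ^ 2)) /\
    (e <= INR (length L))%R.
Proof.
  intros Hm Ha1 Ha12 Ha23 Hga Hal1 Hal1c _ _ _ _ Hgc Htr Hstable Hnd HT Hk Hkp Hnu Hloc23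
    _ Hlen Hn e Heta.
  assert (HTl : forall p, In p Tl -> prime p /\ 5 <= p) by (intros p Hp; apply HT in Hp; tauto).
  destruct (beta_sieve m a1 a2 a3 al1 al2 al3 kappa nu Hga Hgc Hstable Tl n ltac:(lia) HTl Hkp)
    as [L [HL [Hgood Hcount]]].
  exists L. split; [exact HL|]. split.
  - intros u Hu. destruct (Hgood u Hu) as [Hun Hgood_u]. split; [lia|].
    apply beta_rep_Z; try assumption; try lia. intros q Hq.
    destruct (prime_cases q Hq) as [->|[->|H5]]; [apply Hloc23; lia ..|].
    destruct (classic (In q Tl)) as [HqT|HqT]; [apply Hgood_u, HqT|].
    apply beta_rep_Zp_of_isotropic; try assumption.
    intro Haniso. apply HqT, HT. auto.
  - eapply Rle_trans; [apply (is_eta_le n s e Tl) | exact Hcount]; assumption.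
Qed.
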